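(* Let $X_1,X_2$ be complex Banach spaces, $\mathcal{A}_1\subseteq\mathcal{B}(X_1)$, $\mathcal{A}_2\subseteq\mathcal{B}(X_2)$ standard operator algebras, $r,s$ nonnegative integers with $r+s\geq1$, and $\Phi:\mathcal{A}_1\to\mathcal{A}_2$ a map whose range contains every operator in $\mathcal{B}(X_2)$ of rank at most two, satisfying $\sigma_\pi(B^rAB^s)=\sigma_\pi(\Phi(B)^r\Phi(A)\Phi(B)^s)$ for all $A,B\in\mathcal{A}_1$. Then: $\Phi(A)=0$ if and only if $A=0$; $\Phi$ is linear and injective; and for every $A\in\mathcal{A}_1$, $A$ has rank one if and only if $\Phi(A)$ has rank one.
   Context: A standard operator algebra on a complex Banach space $X$ is a subalgebra of $\mathcal{B}(X)$ containing all finite rank operators; it need not be closed or unital. The peripheral spectrum of $T$ is $\sigma_\pi(T)=\{z\in\sigma(T):|z|=r(T)\}$, where $r(T)$ is the spectral radius. *)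

From Stdlib Require Import Reals Lra.
Open Scope R_scope.

Definition C := (R * R)%type.
Definition C0 : C := (0, 0).
Definition C1 : C := (1, 0).
Definition Cplus (a b : C) : C := (fst a + fst b, snd a + snd b).
Definition Cmult (a b : C) : C :=
  (fst a * fst b - snd a * snd b, fst a * snd b + snd a * fst b).
Definition Cmod (a : C) : R := sqrt (fst a ^ 2 + snd a ^ 2).

Record CBanach := {
  car :> Type;
  vzero : car;
  vadd : car -> car -> car;
  vopp : car -> car;
  vscal : C -> car -> car;
  vnorm : car -> R;
  vadd_assoc : forall x y z, vadd x (vadd y z) = vadd (vadd x y) z;
  vadd_comm : forall x y, vadd x y = vadd y x;
  vadd_zero : forall x, vadd x vzero = x;
  vadd_opp : forall x, vadd x (vopp x) = vzero;
  vscal_one : forall x, vscal C1 x = x;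
  vscal_assoc : forall a b x, vscal a (vscal b x) = vscal (Cmult a b) x;
  vscal_distr_v : forall a x y, vscal a (vadd x y) = vadd (vscal a x) (vscal a y);
  vscal_distr_s : forall a b x, vscal (Cplus a b) x = vadd (vscal a x) (vscal b x);
  vnorm_zero : forall x, vnorm x = 0 -> x = vzero;
  vnorm_triangle : forall x y, vnorm (vadd x y) <= vnorm x + vnorm y;
  vnorm_scal : forall a x, vnorm (vscal a x) = Cmod a * vnorm x;
  vcomplete : forall u : nat -> car,
    (forall eps, 0 < eps -> exists N, forall m n, (N <= m)%nat -> (N <= n)%nat ->
        vnorm (vadd (u m) (vopp (u n))) < eps) ->
    exists l, forall eps, 0 < eps -> exists N, forall n, (N <= n)%nat ->
        vnorm (vadd (u n) (vopp l)) < eps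
}.

Arguments vzero {c}.
Arguments vadd {c}.
Arguments vopp {c}.
Arguments vscal {c}.
Arguments vnorm {c}.

Section Ops.
Variable X : CBanach.

Definition op := X -> X.

Definition is_linear (T : op) : Prop :=
  (forall x y, T (vadd x y) = vadd (T x) (T y)) /\
  (forall a x, T (vscal a x) = vscal a (T x)).

Definition is_bounded (T : op) : Prop :=
  exists M : R, forall x, vnorm (T x) <= M * vnorm x.

Definition in_BX (T : op) : Prop := is_linear T /\ is_bounded T.

Definition op_zero : op := fun _ => vzero.
Definition op_id : op := fun x => x.
Definition op_add (S T : op) : op := fun x => vadd (S x) (T x).
Definition op_scal (a : C) (T : op) : op := fun x => vscal a (T x).
Definition op_comp (S T : op) : op := fun x => S (T x).
Definition op_pow (T : op) (n : nat) : op := fun x => Nat.iter n T x.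

Fixpoint vsum (f : nat -> X) (n : nat) : X :=
  match n with O => vzero | S k => vadd (vsum f k) (f k) end.

Definition rank_le (T : op) (k : nat) : Prop :=
  exists v : nat -> X, forall x, exists c : nat -> C,
    T x = vsum (fun i => vscal (c i) (v i)) k.

Definition finite_rank (T : op) : Prop := exists k, rank_le T k.

Definition rank_one (T : op) : Prop := rank_le T 1 /\ T <> op_zero.

Definition standard_op_alg (A : op -> Prop) : Prop :=
  (forall T, A T -> in_BX T) /\
  (forall T, in_BX T -> finite_rank T -> A T) /\
  (forall S T, A S -> A T -> A (op_add S T)) /\
  (forall a T, A T -> A (op_scal a T)) /\
  (forall S T, A S -> A T -> A (op_comp S T)).

Definition spectrum (T : op) (z : C) : Prop :=
  ~ exists S : op, in_BX S /\
      (forall x, S (vadd (vscal z x) (vopp (T x))) = x) /\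
      (forall x, vadd (vscal z (S x)) (vopp (T (S x))) = x).

Definition is_spectral_radius (T : op) (r : R) : Prop :=
  is_lub (fun t => exists w, spectrum T w /\ t = Cmod w) r.

Definition periph_spectrum (T : op) (z : C) : Prop :=
  spectrum T z /\ is_spectral_radius T (Cmod z).

End Ops.

Arguments op_zero {X}.
Arguments op_add {X}.
Arguments op_scal {X}.
Arguments op_comp {X}.
Arguments op_pow {X}.
Arguments rank_le {X}.
Arguments rank_one {X}.
Arguments in_BX {X}.
Arguments standard_op_alg {X}.
Arguments periph_spectrum {X}.

Definition sandwich {X : CBanach} (r s : nat) (B A : op X) : op X :=
  op_comp (op_pow B r) (op_comp A (op_pow B s)).

From Pilot Require Import Defs.
From Stdlib Require Import Reals Lra Lia List Classical ClassicalEpsilon FunctionalExtensionality.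
From Coquelicot Require Import Complex.
From mathcomp Require classical_sets.

(** For a nonzero vector [y] and a bounded
    functional [g] with [g y = 1], the idempotent [P = g (.) y] satisfies
    σπ(P^r A P^s) = {g (A y)} for every bounded [A].  Since every rank-one
    idempotent of [X2] is some [Φ(B)], the preserver property turns this into
    σπ(B^r A B^s) = {g (Φ(A) y)} for all [A] in [A1]; as no peripheral spectrum
    of B^r A B^s is then of the form {m, -m} (m ≠ 0), [B^(r+s)] has rank at
    most one, and the value [g (Φ(A) y)] is read off from [B^(r+s) (A v) = l v],
    which is linear in [A].  Linearity of [Φ] follows because bounded
    functionals separate vectors (Hahn–Banach).  Finally an operator [T] of
    rank at least two always admits a rank-two [S] with ±m ∈ σπ(S^r T S^s),
    whereas a sandwich of a rank-one operator has at most one peripheral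
    point; this gives the preservation of rank one in both directions. *)

Open Scope C_scope.

Lemma C_ext (a b : C) : fst a = fst b -> snd a = snd b -> a = b.
Proof. destruct a, b; simpl; intros; subst; reflexivity. Qed.

Lemma Cneq (x y : R) : x <> y -> RtoC x <> RtoC y.
Proof. intros H E. apply H. exact (f_equal fst E). Qed.

Lemma C1_neq0 : RtoC 1 <> RtoC 0.
Proof. apply Cneq; lra. Qed.

Lemma Cmult_integral (a b : C) : a * b = RtoC 0 -> a = RtoC 0 \/ b = RtoC 0.
Proof.
  intros H. destruct (Ceq_dec a (RtoC 0)) as [Ha|Ha]; [left; exact Ha|right].
  replace b with (/ a * (a * b)) by (field; exact Ha). rewrite H. ring.
Qed.

Lemma C_eq_opp (m : C) : m = - m -> m = RtoC 0.
Proof.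
  intros E. assert (E2 : RtoC 2 * m = RtoC 0).
  { replace (RtoC 2 * m) with (m - - m) by (apply C_ext; simpl; ring). rewrite <- E. ring. }
  destruct (Cmult_integral _ _ E2) as [E3|E3]; [|exact E3].
  exfalso. exact (Cneq 2 0 ltac:(lra) E3).
Qed.

Lemma Cpow_cis (a : R) (n : nat) :
  Cpow (cos a, sin a) n = (cos (INR n * a), sin (INR n * a)).
Proof.
  induction n as [|n IH].
  - simpl. apply C_ext; simpl; rewrite Rmult_0_l; [rewrite cos_0|rewrite sin_0]; reflexivity.
  - simpl Cpow. rewrite IH, S_INR.
    replace ((INR n + 1) * a)%R with (a + INR n * a)%R by ring.
    apply C_ext; simpl; [rewrite cos_plus | rewrite sin_plus]; ring.
Qed.

Lemma exp_pow (x : R) (n : nat) : (exp x ^ n = exp (INR n * x))%R.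
Proof.
  induction n as [|n IH]; simpl.
  - rewrite Rmult_0_l, exp_0; reflexivity.
  - rewrite IH, <- exp_plus. f_equal. destruct n; simpl; ring.
Qed.

Lemma C_polar (w : C) : w <> RtoC 0 ->
  exists t, w = (Cmod w * cos t, Cmod w * sin t)%R.
Proof.
  intros Hw. destruct w as [a b].
  pose proof (proj1 (Cmod_gt_0 (a,b)) Hw) as Hr.
  set (r := Cmod (a,b)) in *.
  assert (Hr2 : (r * r = a * a + b * b)%R).
  { unfold r, Cmod; simpl. rewrite sqrt_sqrt; [ring|nra]. }
  assert (Hx : (-1 <= a / r <= 1)%R).
  { split; apply (Rmult_le_reg_r r); try lra;
      unfold Rdiv; rewrite Rmult_assoc, Rinv_l; nra. }
  assert (Hs : sqrt (1 - (a/r)²) = (Rabs b / r)%R).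
  { assert (Hab : (Rabs b * Rabs b = b * b)%R).
    { rewrite <- Rabs_mult. apply Rabs_right. nra. }
    assert (E : (1 - (a/r)² = (Rabs b / r) * (Rabs b / r))%R).
    { unfold Rsqr. replace (Rabs b / r * (Rabs b / r))%R with ((Rabs b * Rabs b) / (r*r))%R
        by (field; lra).
      rewrite Hab. replace (b*b)%R with (r*r - a*a)%R by lra. field. lra. }
    rewrite E. apply sqrt_square. apply Rmult_le_pos; [apply Rabs_pos|].
    left; apply Rinv_0_lt_compat; lra. }
  destruct (Rle_dec 0 b) as [Hb|Hb].
  - exists (acos (a/r)). rewrite cos_acos, sin_acos, Hs by exact Hx.
    rewrite Rabs_right by lra. apply C_ext; simpl; field; lra.
  - exists (- acos (a/r))%R. rewrite cos_neg, sin_neg, cos_acos, sin_acos, Hs by exact Hx.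
    rewrite Rabs_left by lra. apply C_ext; simpl; field; lra.
Qed.

Lemma C_nth_root (n : nat) (w : C) : (1 <= n)%nat -> exists u, Cpow u n = w.
Proof.
  intros Hn. destruct (Ceq_dec w (RtoC 0)) as [H0|H0].
  - subst. exists (RtoC 0). destruct n; [lia|]. simpl. ring.
  - destruct (C_polar w H0) as [t Ht].
    pose proof (proj1 (Cmod_gt_0 w) H0) as Hr.
    set (rho := exp (ln (Cmod w) / INR n)).
    assert (HnR : (0 < INR n)%R) by (apply lt_0_INR; lia).
    assert (Hrho : (rho ^ n = Cmod w)%R).
    { unfold rho. rewrite exp_pow.
      replace (INR n * (ln (Cmod w) / INR n))%R with (ln (Cmod w)) by (field; lra).
      apply exp_ln; lra. }
    exists (RtoC rho * (cos (t / INR n), sin (t / INR n))).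
    rewrite Cpow_mult_l, Cpow_cis, <- RtoC_pow, Hrho.
    replace (INR n * (t / INR n))%R with t by (field; lra).
    remember (Cmod w) as m. rewrite Ht. apply C_ext; simpl; ring.
Qed.

Section VectorAlgebra.
Context {X : CBanach}.

(** The axioms of [CBanach], restated with Coquelicot's operations on [C]. *)
Lemma vscal_scal (a b : C) (x : X) : vscal a (vscal b x) = vscal (a * b) x.
Proof. apply vscal_assoc. Qed.
Lemma vscal_plus (a b : C) (x : X) : vscal (a + b) x = vadd (vscal a x) (vscal b x).
Proof. apply vscal_distr_s. Qed.
Lemma vscal_1 (x : X) : vscal (RtoC 1) x = x.
Proof. apply vscal_one. Qed.

Lemma vadd_cancel (x y z : X) : vadd x y = vadd x z -> y = z.
Proof.
  intros H.
  assert (E : forall w : X, w = vadd (vadd x w) (vopp x)).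
  { intros w. rewrite (vadd_comm _ x w), <- vadd_assoc, vadd_opp, vadd_zero. reflexivity. }
  rewrite (E y), (E z), H. reflexivity.
Qed.

Lemma vadd_zero_l (x : X) : vadd vzero x = x.
Proof. rewrite vadd_comm; apply vadd_zero. Qed.

Lemma vscal_0 (x : X) : vscal (RtoC 0) x = vzero.
Proof.
  apply (vadd_cancel (vscal (RtoC 0) x)). rewrite vadd_zero, <- vscal_plus.
  f_equal. ring.
Qed.

Lemma vscal_zero (a : C) : vscal a (@vzero X) = vzero.
Proof. rewrite <- (vscal_0 vzero), vscal_scal. f_equal. ring. Qed.

Lemma vopp_scal (x : X) : vopp x = vscal (RtoC (-1)) x.
Proof.
  apply (vadd_cancel x). rewrite vadd_opp. rewrite <- (vscal_1 x) at 1.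
  rewrite <- vscal_plus, <- (vscal_0 x). f_equal. apply C_ext; simpl; ring.
Qed.

Lemma vscal_inj (c : C) (x : X) : vscal c x = vzero -> c <> RtoC 0 -> x = vzero.
Proof.
  intros H Hc. rewrite <- (vscal_1 x), <- (vscal_zero (/ c)), <- H, vscal_scal.
  f_equal. field. exact Hc.
Qed.

(** Reflexive normalisation of linear-combination identities: a formal
    expression over a list of atoms is evaluated to [X] and to its vector of
    coefficients; two expressions with equal coefficients are equal in [X]. *)
Inductive vexpr : Type :=
| EAtom : nat -> vexpr
| EAdd : vexpr -> vexpr -> vexpr
| EScal : C -> vexpr -> vexpr
| EOpp : vexpr -> vexpr
| EZero : vexpr.

Fixpoint veval (env : list X) (e : vexpr) : X :=
  match e with
  | EAtom n => nth n env vzero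
  | EAdd a b => vadd (veval env a) (veval env b)
  | EScal c a => vscal c (veval env a)
  | EOpp a => vopp (veval env a)
  | EZero => vzero
  end.

Fixpoint vcoef (i : nat) (e : vexpr) : C :=
  match e with
  | EAtom n => if Nat.eqb i n then RtoC 1 else RtoC 0
  | EAdd a b => vcoef i a + vcoef i b
  | EScal c a => c * vcoef i a
  | EOpp a => - vcoef i a
  | EZero => RtoC 0
  end.

Fixpoint lcomb (env : list X) (f : nat -> C) : X :=
  match env with
  | nil => vzero
  | v :: env' => vadd (vscal (f 0%nat) v) (lcomb env' (fun i => f (S i)))
  end.

Lemma lcomb_add env : forall f g,
  lcomb env (fun i => f i + g i) = vadd (lcomb env f) (lcomb env g).
Proof.
  induction env as [|v env IH]; intros f g; simpl.
  - rewrite vadd_zero; reflexivity.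
  - rewrite IH, vscal_plus, !vadd_assoc. f_equal.
    rewrite <- !vadd_assoc. f_equal. apply vadd_comm.
Qed.

Lemma lcomb_scal env : forall c f, lcomb env (fun i => c * f i) = vscal c (lcomb env f).
Proof.
  induction env as [|v env IH]; intros c f; simpl.
  - rewrite vscal_zero; reflexivity.
  - rewrite IH, vscal_distr_v, vscal_scal. reflexivity.
Qed.

Lemma lcomb_zero env : lcomb env (fun _ => RtoC 0) = vzero.
Proof.
  induction env as [|v env IH]; simpl; [reflexivity|].
  rewrite IH, vscal_0, vadd_zero. reflexivity.
Qed.

Lemma lcomb_ext env : forall f g,
  (forall i, (i < length env)%nat -> f i = g i) -> lcomb env f = lcomb env g.
Proof.
  induction env as [|v env IH]; intros f g H; simpl; [reflexivity|].
  rewrite (H 0%nat) by (simpl; lia). f_equal. apply IH. intros i Hi. apply H. simpl; lia.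
Qed.

Lemma lcomb_atom env : forall n,
  lcomb env (fun i => if Nat.eqb i n then RtoC 1 else RtoC 0) = nth n env vzero.
Proof.
  induction env as [|v env IH]; intros n; simpl.
  - destruct n; reflexivity.
  - destruct n as [|n]; simpl.
    + rewrite vscal_1, lcomb_zero, vadd_zero. reflexivity.
    + rewrite vscal_0, vadd_zero_l. apply IH.
Qed.

Lemma veval_lcomb env e : veval env e = lcomb env (fun i => vcoef i e).
Proof.
  induction e; simpl.
  - symmetry; apply lcomb_atom.
  - rewrite lcomb_add, IHe1, IHe2. reflexivity.
  - rewrite lcomb_scal, IHe. reflexivity.
  - rewrite vopp_scal, IHe, <- lcomb_scal. apply lcomb_ext. intros; apply C_ext; simpl; ring.
  - symmetry; apply lcomb_zero.
Qed.

Lemma vring_sound env e1 e2 :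
  (forall i, (i < length env)%nat -> vcoef i e1 = vcoef i e2) -> veval env e1 = veval env e2.
Proof. intros H. rewrite !veval_lcomb. apply lcomb_ext. exact H. Qed.

End VectorAlgebra.

(** Reification for [vring]: collect the atoms (maximal non-linear subterms)
    of both sides, reify, and compare coefficients with [ring]/[field]. *)
Ltac vin x l :=
  match l with
  | nil => constr:(false)
  | cons x _ => constr:(true)
  | cons _ ?l' => vin x l'
  end.

Ltac vcollect t l :=
  match t with
  | @vadd _ ?a ?b => let l1 := vcollect a l in vcollect b l1
  | @vopp _ ?a => vcollect a l
  | @vscal _ _ ?a => vcollect a l
  | @vzero _ => l
  | _ => let b := vin t l in
         match b with
         | true => l
         | false => eval cbv [app] in (app l (cons t nil))
         end
  end.

Ltac vlookup x l :=
  match l with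
  | cons x _ => constr:(0%nat)
  | cons _ ?l' => let n := vlookup x l' in constr:(S n)
  end.

Ltac vreify t l :=
  match t with
  | @vadd ?X ?a ?b => let ea := vreify a l in let eb := vreify b l in constr:(EAdd ea eb)
  | @vopp ?X ?a => let ea := vreify a l in constr:(EOpp ea)
  | @vscal ?X ?c ?a => let ea := vreify a l in constr:(EScal c ea)
  | @vzero ?X => constr:(EZero)
  | _ => let n := vlookup t l in constr:(EAtom n)
  end.

Ltac vring_prep :=
  match goal with
  | |- @eq (car ?X) ?lhs ?rhs =>
      let l0 := vcollect lhs (@nil (car X)) in
      let l := vcollect rhs l0 in
      let e1 := vreify lhs l in
      let e2 := vreify rhs l in
      change (@veval X l e1 = @veval X l e2);
      apply vring_sound;
      let i := fresh "i" in let Hi := fresh "Hi" in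
      intros i Hi; simpl in Hi;
      repeat (destruct i as [|i]; [simpl vcoef| try (exfalso; lia)])
  end.

Ltac vring := vring_prep; try (unfold Defs.Cmult, Defs.Cplus; ring); try (apply C_ext; simpl; ring).
Ltac vfield := vring_prep; try (field; auto); try (apply C_ext; simpl; field; auto).

Section Functionals.
Context {X : CBanach}.

(** The norm axiom, stated with Coquelicot's modulus. *)
Lemma vnorm_vscal (a : C) (x : X) : vnorm (vscal a x) = (Cmod a * vnorm x)%R.
Proof. exact (vnorm_scal _ a x). Qed.

Lemma vnorm_vzero : vnorm (@vzero X) = 0%R.
Proof. rewrite <- (vscal_0 vzero), vnorm_vscal, Cmod_0. ring. Qed.

Lemma Rabs_m1 : Rabs (-1) = 1%R.
Proof. unfold Rabs; destruct Rcase_abs; lra. Qed.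

Lemma vnorm_pos (x : X) : (0 <= vnorm x)%R.
Proof.
  pose proof (vnorm_triangle _ x (vopp x)) as H.
  rewrite vadd_opp, vnorm_vzero, vopp_scal, vnorm_vscal, Cmod_R, Rabs_m1 in H. lra.
Qed.

Lemma vnorm_pos_nz (x : X) : x <> vzero -> (0 < vnorm x)%R.
Proof.
  intros Hx. destruct (vnorm_pos x) as [H|H]; [exact H|].
  exfalso; apply Hx, vnorm_zero; auto.
Qed.

Lemma bound_nonneg (n : X -> R) (m : X -> R) : (forall x, 0 <= m x)%R ->
  (exists M, forall x, n x <= M * m x)%R ->
  exists M, (0 <= M)%R /\ forall x, (n x <= M * m x)%R.
Proof.
  intros Hm [M HM]. exists (Rabs M). split; [apply Rabs_pos|]. intros x.
  eapply Rle_trans; [apply HM|]. apply Rmult_le_compat_r; [apply Hm|apply Rle_abs].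
Qed.

Definition is_functional (f : X -> C) : Prop :=
  (forall x y, f (vadd x y) = f x + f y) /\ (forall a x, f (vscal a x) = a * f x) /\
  exists M, forall x, (Cmod (f x) <= M * vnorm x)%R.

Lemma functional_zero f : is_functional f -> f vzero = RtoC 0.
Proof. intros [_ [H _]]. rewrite <- (vscal_0 vzero), H. ring. Qed.

Lemma functional_opp f x : is_functional f -> f (vopp x) = - f x.
Proof. intros [_ [H _]]. rewrite vopp_scal, H. apply C_ext; simpl; ring. Qed.

Lemma functional_lc f a b (x y : X) : is_functional f ->
  f (vadd (vscal a x) (vscal b y)) = a * f x + b * f y.
Proof. intros [fa [fs _]]. rewrite fa, !fs. reflexivity. Qed.

Lemma functional_add f g : is_functional f -> is_functional g ->
  is_functional (fun x => f x + g x).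
Proof.
  intros [fa [fs [M HM]]] [ga [gs [N HN]]]. split; [|split].
  - intros; rewrite fa, ga; ring.
  - intros; rewrite fs, gs; ring.
  - exists (M + N)%R. intros x. eapply Rle_trans; [apply Cmod_triangle|].
    specialize (HM x); specialize (HN x). lra.
Qed.

Lemma functional_scal c f : is_functional f -> is_functional (fun x => c * f x).
Proof.
  intros [fa [fs [M HM]]]. split; [|split].
  - intros; rewrite fa; ring.
  - intros; rewrite fs; ring.
  - exists (Cmod c * M)%R. intros x. rewrite Cmod_mult, Rmult_assoc.
    apply Rmult_le_compat_l; [apply Cmod_ge_0|apply HM].
Qed.

End Functionals.

(** ** The Hahn–Banach theorem *)

Lemma zorn_union (T : Type) (P : (T -> Prop) -> Prop) :
  (forall F : (T -> Prop) -> Prop, (forall A, F A -> P A) ->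
     (forall A B, F A -> F B -> (forall t, A t -> B t) \/ (forall t, B t -> A t)) ->
     P (fun t => exists2 A, F A & A t)) ->
  exists A, P A /\ forall B, (forall t, A t -> B t) -> P B -> forall t, B t -> A t.
Proof.
  intros H. destruct (@classical_sets.Zorn_bigcup T P) as [A [PA HA]].
  - intros F FP Ftot. apply H; [exact FP| exact Ftot].
  - exists A. split; [exact PA|]. intros B AB PB.
    apply NNPP. intros NBA. apply (HA B); [|exact PB].
    split; [exact AB|]. intros BA. apply NBA. exact BA.
Qed.

Section RealHahnBanach.
Context {X : CBanach}.

Definition rs (c : R) (x : X) : X := vscal (RtoC c) x.

Lemma vnorm_rs c x : vnorm (rs c x) = (Rabs c * vnorm x)%R.
Proof. unfold rs. rewrite vnorm_vscal, Cmod_R. reflexivity. Qed.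

(** A set of pairs [(x, t)] is the graph of a real-linear functional on a
    real subspace, dominated by the norm. *)
Definition dominated_graph (A : X * R -> Prop) : Prop :=
  (forall x t u, A (x,t) -> A (x,u) -> t = u) /\
  (forall x y t u, A (x,t) -> A (y,u) -> A (vadd x y, t + u)%R) /\
  (forall c x t, A (x,t) -> A (rs c x, c * t)%R) /\
  (forall x t, A (x,t) -> (t <= vnorm x)%R).

Variable w : X.
Hypothesis Hw : w <> vzero.

Definition line_graph (p : X * R) : Prop := exists c, p = (rs c w, c * vnorm w)%R.

(** Admissible graphs: dominated, and empty or extending [line_graph].  The
    empty alternative makes the union of the empty chain admissible. *)
Definition admissible (A : X * R -> Prop) : Prop :=
  dominated_graph A /\ ((forall p, ~ A p) \/ (forall p, line_graph p -> A p)).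

Lemma rs_inj_w c d : rs c w = rs d w -> c = d.
Proof.
  intros H. apply NNPP; intros Hcd.
  assert (E : vscal (RtoC c - RtoC d) w = vzero).
  { rewrite <- (vadd_opp _ (rs d w)), <- H at 1. unfold rs. vring. }
  apply Hw, (vscal_inj _ _ E). intros E2. apply Hcd.
  apply (f_equal fst) in E2. simpl in E2. lra.
Qed.

Lemma line_graph_dominated : dominated_graph line_graph.
Proof.
  split; [|split; [|split]].
  - intros x t u [c Hc] [d Hd]. injection Hc; injection Hd; intros; subst.
    assert (c = d) by (apply rs_inj_w; congruence). subst. reflexivity.
  - intros x y t u [c Hc] [d Hd]. injection Hc; injection Hd; intros; subst.
    exists (c + d)%R. f_equal; [unfold rs; vring | ring].
  - intros k x t [c Hc]. injection Hc; intros; subst. exists (k * c)%R.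
    f_equal; [unfold rs; vring | ring].
  - intros x t [c Hc]. injection Hc; intros; subst. rewrite vnorm_rs.
    apply Rmult_le_compat_r; [apply vnorm_pos|apply Rle_abs].
Qed.

Lemma maximal_admissible : exists A, admissible A /\
  forall B, (forall t, A t -> B t) -> admissible B -> forall t, B t -> A t.
Proof.
  apply zorn_union. intros F FP Ftot. split; [split; [|split; [|split]]|].
  - intros x t u [A FA At] [B FB Bu].
    destruct (Ftot A B FA FB) as [AB|BA].
    + apply (proj1 (proj1 (FP B FB)) x); auto.
    + apply (proj1 (proj1 (FP A FA)) x); auto.
  - intros x y t u [A FA At] [B FB Bu].
    destruct (Ftot A B FA FB) as [AB|BA].
    + exists B; [exact FB|]. apply (proj1 (proj2 (proj1 (FP B FB)))); auto.
    + exists A; [exact FA|]. apply (proj1 (proj2 (proj1 (FP A FA)))); auto.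
  - intros c x t [A FA At]. exists A; [exact FA|].
    apply (proj1 (proj2 (proj2 (proj1 (FP A FA))))); auto.
  - intros x t [A FA At]. apply (proj2 (proj2 (proj2 (proj1 (FP A FA))))) with (x := x); auto.
  - destruct (classic (exists A, F A /\ forall p, line_graph p -> A p)) as [[A [FA HA]]|N].
    + right. intros p Hp. exists A; auto.
    + left. intros p [A FA Ap]. destruct (proj2 (FP A FA)) as [E|E].
      * apply (E p Ap).
      * apply N. exists A; auto.
Qed.

(** One-step extension: a dominated graph [A] not defined at [x0] extends to
    [x0] with the value [alpha], chosen between the bounds of [key_ineq]. *)
Section OneStepExtension.
Variable A : X * R -> Prop.
Hypothesis HA : dominated_graph A.
Hypothesis A00 : A (vzero, 0%R).
Variable x0 : X.
Hypothesis Hx0 : forall t, ~ A (x0, t).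

Lemma key_ineq x t y u : A (x,t) -> A (y,u) ->
  (u - vnorm (vadd y (vopp x0)) <= vnorm (vadd x x0) - t)%R.
Proof.
  intros Ht Hu. destruct HA as [_ [Hadd [_ Hdom]]].
  pose proof (Hdom _ _ (Hadd _ _ _ _ Ht Hu)) as H1.
  assert (E : vadd x y = vadd (vadd x x0) (vadd y (vopp x0))) by vring.
  rewrite E in H1. pose proof (vnorm_triangle _ (vadd x x0) (vadd y (vopp x0))). lra.
Qed.

Lemma alpha_ex : { a : R | (forall y u, A (y,u) -> u - vnorm (vadd y (vopp x0)) <= a)%R /\
   (forall x t, A (x,t) -> a <= vnorm (vadd x x0) - t)%R }.
Proof.
  set (S s := exists y u, A (y,u) /\ s = (u - vnorm (vadd y (vopp x0)))%R).
  destruct (completeness S) as [a [Ha1 Ha2]].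
  - exists (vnorm (vadd vzero x0) - 0)%R. intros s [y [u [Hyu ->]]].
    apply (key_ineq _ _ _ _ A00 Hyu).
  - exists (0 - vnorm (vadd vzero (vopp x0)))%R. exists vzero, 0%R. auto.
  - exists a. split.
    + intros y u Hyu. apply Ha1. exists y, u. auto.
    + intros x t Hxt. apply Ha2. intros s [y [u [Hyu ->]]]. apply (key_ineq _ _ _ _ Hxt Hyu).
Qed.

Definition alpha := proj1_sig alpha_ex.

Definition graph_ext (p : X * R) : Prop :=
  exists x t c, A (x,t) /\ p = (vadd x (rs c x0), t + c * alpha)%R.

Lemma graph_ext_sup p : A p -> graph_ext p.
Proof.
  destruct p as [x t]. intros H. exists x, t, 0%R. split; [exact H|].
  f_equal; [unfold rs; vring | ring].
Qed.

Lemma graph_ext_x0 : graph_ext (x0, alpha).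
Proof.
  exists vzero, 0%R, 1%R. split; [exact A00|].
  f_equal; [unfold rs; vring | ring].
Qed.

(** The extension is still a function, since [x0] is outside the domain of [A]. *)
Lemma graph_ext_functional z t u : graph_ext (z,t) -> graph_ext (z,u) -> t = u.
Proof.
  destruct HA as [Hfun [Hadd [Hsc _]]].
  intros [x [t1 [c [H1 E1]]]] [y [u1 [d [H2 E2]]]].
  injection E1 as -> ->. injection E2 as H0 ->.
  destruct (Req_dec c d) as [->|Hcd].
  - assert (x = y) by (apply (vadd_cancel (rs d x0)); rewrite vadd_comm, H0, vadd_comm; reflexivity).
    subst. rewrite (Hfun _ _ _ H1 H2). reflexivity.
  - exfalso. apply (Hx0 ((u1 - t1) / (c - d))).
    assert (E : x0 = rs (/ (c - d)) (vadd y (rs (-1) x))).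
    { assert (E3 : vadd y (rs (-1) x) = rs (c - d) x0).
      { transitivity (vadd (vadd y (rs d x0)) (vadd (rs (-1) x) (rs (-d) x0))).
        - unfold rs. vring.
        - rewrite <- H0. unfold rs. vring. }
      rewrite E3. unfold rs. rewrite vscal_scal, <- (vscal_1 x0) at 1.
      f_equal. apply C_ext; simpl; field; lra. }
    rewrite E. unfold Rdiv. rewrite Rmult_comm. apply Hsc.
    replace (u1 - t1)%R with (u1 + -1 * t1)%R by ring.
    apply Hadd; [exact H2| apply Hsc; exact H1].
Qed.

(** The extension is dominated by the norm: this is where [alpha] is used. *)
Lemma graph_ext_dominated z t : graph_ext (z,t) -> (t <= vnorm z)%R.
Proof.
  destruct HA as [_ [_ [Hsc Hdom]]].
  intros [x [t1 [c [H1 E1]]]]. injection E1; intros; subst.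
  destruct (proj2_sig alpha_ex) as [Hlo Hhi]. fold alpha in Hlo, Hhi.
  destruct (Rtotal_order c 0) as [Hc|[Hc|Hc]].
  - set (d := (- c)%R). assert (Hd : (0 < d)%R) by (unfold d; lra).
    pose proof (Hlo (rs (/ d) x) (/ d * t1)%R (Hsc _ _ _ H1)) as L.
    assert (E : vadd (rs (/ d) x) (vopp x0) = rs (/ d) (vadd x (rs c x0))).
    { unfold rs. vring. all: apply C_ext; simpl; unfold d; field; lra. }
    rewrite E, vnorm_rs, Rabs_right in L by (left; apply Rinv_0_lt_compat; lra).
    apply (Rmult_le_compat_l d) in L; [|lra].
    replace (d * (/ d * t1 - / d * vnorm (vadd x (rs c x0))))%R
      with (t1 - vnorm (vadd x (rs c x0)))%R in L by (field; lra).
    unfold d in L. lra.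
  - subst. replace (vadd x (rs 0 x0)) with x by (unfold rs; vring).
    rewrite Rmult_0_l, Rplus_0_r. apply Hdom; auto.
  - pose proof (Hhi (rs (/ c) x) (/ c * t1)%R (Hsc _ _ _ H1)) as L.
    assert (E : vadd (rs (/ c) x) x0 = rs (/ c) (vadd x (rs c x0))).
    { unfold rs. vring. all: apply C_ext; simpl; field; lra. }
    rewrite E, vnorm_rs, Rabs_right in L by (left; apply Rinv_0_lt_compat; lra).
    apply (Rmult_le_compat_l c) in L; [|lra].
    replace (c * (/ c * vnorm (vadd x (rs c x0)) - / c * t1))%R
      with (vnorm (vadd x (rs c x0)) - t1)%R in L by (field; lra).
    lra.
Qed.

Lemma graph_ext_dominated_graph : dominated_graph graph_ext.
Proof.
  destruct HA as [_ [Hadd [Hsc _]]].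
  split; [|split; [|split]].
  - exact graph_ext_functional.
  - intros z1 z2 t u [x [t1 [c [H1 E1]]]] [y [u1 [d [H2 E2]]]].
    injection E1; injection E2; intros; subst.
    exists (vadd x y), (t1 + u1)%R, (c + d)%R. split; [apply Hadd; auto|].
    f_equal; [unfold rs; vring | ring].
  - intros k z t [x [t1 [c [H1 E1]]]]. injection E1; intros; subst.
    exists (rs k x), (k * t1)%R, (k * c)%R. split; [apply Hsc; auto|].
    f_equal; [unfold rs; vring | ring].
  - exact graph_ext_dominated.
Qed.

End OneStepExtension.

Lemma total_dominated_graph : exists A, dominated_graph A /\
  (forall p, line_graph p -> A p) /\ (forall x, exists t, A (x,t)).
Proof.
  destruct maximal_admissible as [A [[HA Hbase] Hmax]].
  assert (HG : forall p, line_graph p -> A p).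
  { destruct Hbase as [E|E]; [|exact E].
    exfalso. assert (Hg : line_graph (w, vnorm w)).
    { exists 1%R. f_equal; [unfold rs; rewrite vscal_1; reflexivity| ring]. }
    apply (E (w, vnorm w)), (Hmax line_graph); [intros t Ht; exfalso; apply (E t Ht)| |exact Hg].
    split; [exact line_graph_dominated| right; auto]. }
  assert (A00 : A (vzero, 0%R)).
  { apply HG. exists 0%R. f_equal; [unfold rs; symmetry; apply vscal_0| ring]. }
  exists A. split; [exact HA|]. split; [exact HG|].
  intros x0. apply NNPP. intros N.
  assert (Hx0 : forall t, ~ A (x0,t)) by (intros t Ht; apply N; exists t; exact Ht).
  apply (Hx0 (alpha A HA A00 x0)), (Hmax (graph_ext A HA A00 x0)).
  - apply graph_ext_sup.
  - split; [exact (graph_ext_dominated_graph A HA A00 x0 Hx0)|].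
    right; intros p Hp; apply graph_ext_sup, HG, Hp.
  - exact (graph_ext_x0 A HA A00 x0).
Qed.

Lemma real_hahn_banach : exists phi : X -> R,
  (forall x y, phi (vadd x y) = phi x + phi y)%R /\ (forall c x, phi (rs c x) = c * phi x)%R /\
  (forall x, phi x <= vnorm x)%R /\ phi w = vnorm w.
Proof.
  destruct total_dominated_graph as [A [[Hfun [Hadd [Hsc Hdom]]] [HG Tot]]].
  set (phi := fun x => proj1_sig (constructive_indefinite_description _ (Tot x))).
  assert (Hphi : forall x, A (x, phi x))
    by (intros x; exact (proj2_sig (constructive_indefinite_description _ (Tot x)))).
  exists phi. split; [|split; [|split]].
  - intros x y. apply (Hfun (vadd x y)); [apply Hphi| apply Hadd; apply Hphi].
  - intros c x. apply (Hfun (rs c x)); [apply Hphi| apply Hsc; apply Hphi].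
  - intros x. apply Hdom, Hphi.
  - apply (Hfun w); [apply Hphi|].
    replace w with (rs 1 w) at 1 by (unfold rs; apply vscal_1).
    replace (vnorm w) with (1 * vnorm w)%R by ring. apply HG. exists 1%R. reflexivity.
Qed.

End RealHahnBanach.

Lemma Cmod_le_sum (u v : R) : (Cmod (u, v) <= Rabs u + Rabs v)%R.
Proof.
  replace (u, v) with (RtoC u + RtoC v * Ci) by (apply C_ext; simpl; ring).
  eapply Rle_trans; [apply Cmod_triangle|]. rewrite Cmod_mult, Cmod_Ci, !Cmod_R. lra.
Qed.

(** Complex Hahn–Banach: every nonzero vector is sent to 1 by some bounded
    functional (the complex functional is built from the real one as
    [x |-> phi x - i phi (i x)]). *)
Lemma norming_functional {X : CBanach} (w : X) : w <> vzero ->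
  exists f, is_functional f /\ f w = RtoC 1.
Proof.
  intros Hw. destruct (real_hahn_banach w Hw) as [phi [Padd [Psc [Pdom Pw]]]].
  assert (Habs : forall x, (Rabs (phi x) <= vnorm x)%R).
  { intros x. apply Rabs_le. split; [|apply Pdom].
    pose proof (Pdom (rs (-1) x)) as H. rewrite Psc, vnorm_rs, Rabs_m1 in H. lra. }
  set (h := fun x => (phi x, - phi (vscal Ci x))%R : C).
  assert (Hh : is_functional h).
  { split; [|split].
    - intros x y. unfold h. rewrite vscal_distr_v, !Padd. apply C_ext; simpl; ring.
    - intros [p q] x. unfold h.
      assert (E1 : vscal (p,q) x = vadd (rs p x) (rs q (vscal Ci x))) by (unfold rs; vring).
      assert (E2 : vscal Ci (vscal (p,q) x) = vadd (rs (-q) x) (rs p (vscal Ci x)))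
        by (unfold rs; vring).
      rewrite E2, E1, !Padd, !Psc. apply C_ext; simpl; ring.
    - exists 2%R. intros x. unfold h. eapply Rle_trans; [apply Cmod_le_sum|].
      rewrite Rabs_Ropp. pose proof (Habs x). pose proof (Habs (vscal Ci x)) as Hi.
      rewrite vnorm_vscal, Cmod_Ci in Hi. lra. }
  assert (Hhw : h w <> RtoC 0).
  { intros E. apply (f_equal fst) in E. unfold h in E; simpl in E. rewrite Pw in E.
    pose proof (vnorm_pos_nz w Hw). lra. }
  exists (fun x => / h w * h x). split.
  - apply functional_scal. exact Hh.
  - field. exact Hhw.
Qed.

Section Operators.
Context {X : CBanach}.

Lemma lin_zero (T : op X) : is_linear X T -> T vzero = vzero.
Proof. intros [_ Ts]. rewrite <- (vscal_0 vzero) at 1. rewrite Ts. apply vscal_0. Qed.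

Lemma lin_opp (T : op X) x : is_linear X T -> T (vopp x) = vopp (T x).
Proof. intros [_ Ts]. rewrite !vopp_scal, Ts. reflexivity. Qed.

Lemma BX_lin (T : op X) : in_BX T -> is_linear X T.
Proof. intros [H _]; exact H. Qed.

Lemma BX_bnd (T : op X) : in_BX T ->
  exists M, (0 <= M)%R /\ forall x, (vnorm (T x) <= M * vnorm x)%R.
Proof. intros [_ H]. exact (bound_nonneg (fun x => vnorm (T x)) (@vnorm X) (vnorm_pos) H). Qed.

Lemma BX_id : in_BX (fun x : X => x).
Proof. split; [split; auto|]. exists 1%R. intros; lra. Qed.

Lemma BX_zero : in_BX (@op_zero X).
Proof.
  split; [split|].
  - intros; unfold op_zero; rewrite vadd_zero; reflexivity.
  - intros; unfold op_zero; rewrite vscal_zero; reflexivity.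
  - exists 0%R. intros x. unfold op_zero. rewrite vnorm_vzero. lra.
Qed.

Lemma BX_add (S T : op X) : in_BX S -> in_BX T -> in_BX (op_add S T).
Proof.
  intros HS HT. destruct (BX_bnd S HS) as [M [HM0 HM]]. destruct (BX_bnd T HT) as [N [HN0 HN]].
  destruct (BX_lin S HS) as [Sa Ss]. destruct (BX_lin T HT) as [Ta Ts].
  split; [split|].
  - intros. unfold op_add. rewrite Sa, Ta. vring.
  - intros. unfold op_add. rewrite Ss, Ts. vring.
  - exists (M + N)%R. intros x. unfold op_add. eapply Rle_trans; [apply vnorm_triangle|].
    specialize (HM x); specialize (HN x). lra.
Qed.

Lemma BX_scal a (T : op X) : in_BX T -> in_BX (op_scal a T).
Proof.
  intros HT. destruct (BX_bnd T HT) as [N [HN0 HN]]. destruct (BX_lin T HT) as [Ta Ts].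
  split; [split|].
  - intros. unfold op_scal. rewrite Ta. vring.
  - intros. unfold op_scal. rewrite Ts. vring.
  - exists (Cmod a * N)%R. intros x. unfold op_scal. rewrite vnorm_vscal, Rmult_assoc.
    apply Rmult_le_compat_l; [apply Cmod_ge_0| apply HN].
Qed.

Lemma BX_comp (S T : op X) : in_BX S -> in_BX T -> in_BX (op_comp S T).
Proof.
  intros HS HT. destruct (BX_bnd S HS) as [M [HM0 HM]]. destruct (BX_bnd T HT) as [N [HN0 HN]].
  destruct (BX_lin S HS) as [Sa Ss]. destruct (BX_lin T HT) as [Ta Ts].
  split; [split|].
  - intros. unfold op_comp. rewrite Ta, Sa. reflexivity.
  - intros. unfold op_comp. rewrite Ts, Ss. reflexivity.
  - exists (M * N)%R. intros x. unfold op_comp. eapply Rle_trans; [apply HM|].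
    rewrite Rmult_assoc. apply Rmult_le_compat_l; [exact HM0| apply HN].
Qed.

Lemma BX_pow (T : op X) n : in_BX T -> in_BX (op_pow T n).
Proof.
  intros HT. induction n as [|n IH].
  - apply BX_id.
  - change (in_BX (op_comp T (op_pow T n))). apply BX_comp; assumption.
Qed.

Lemma op_pow_add (B : op X) m n x : op_pow B (m + n) x = op_pow B m (op_pow B n x).
Proof. unfold op_pow. apply Nat.iter_add. Qed.

Lemma BX_sandwich (B A : op X) r s : in_BX B -> in_BX A -> in_BX (sandwich r s B A).
Proof. intros HB HA. apply BX_comp; [apply BX_pow; auto| apply BX_comp; [auto| apply BX_pow; auto]]. Qed.

Lemma sandwich_zero (B : op X) r s : in_BX B -> sandwich r s B op_zero = op_zero.
Proof.
  intros HB. apply functional_extensionality. intros x. unfold sandwich, op_comp, op_zero.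
  apply lin_zero, BX_lin, BX_pow; auto.
Qed.

Definition r1 (f : X -> C) (u : X) : op X := fun x => vscal (f x) u.

Lemma BX_r1 f u : is_functional f -> in_BX (r1 f u).
Proof.
  intros [fa [fs HM]].
  destruct (bound_nonneg (fun x => Cmod (f x)) (@vnorm X) (vnorm_pos) HM) as [M [HM0 HM']].
  split; [split|].
  - intros. unfold r1. rewrite fa. vring.
  - intros. unfold r1. rewrite fs. vring.
  - exists (M * vnorm u)%R. intros x. unfold r1. rewrite vnorm_vscal.
    specialize (HM' x). pose proof (vnorm_pos u). nra.
Qed.

Lemma rank1_form (T : op X) : rank_le T 1 -> exists v, forall x, exists c, T x = vscal c v.
Proof.
  intros [v Hv]. exists (v 0%nat). intros x. destruct (Hv x) as [c Ec]. exists (c 0%nat).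
  rewrite Ec. simpl. apply vadd_zero_l.
Qed.

Lemma rank1_of_form (T : op X) v : (forall x, exists c, T x = vscal c v) -> rank_le T 1.
Proof.
  intros H. exists (fun _ => v). intros x. destruct (H x) as [c Ec]. exists (fun _ => c).
  rewrite Ec. simpl. rewrite vadd_zero_l. reflexivity.
Qed.

Lemma rank2_form (A : op X) u1 u2 (c1 c2 : X -> C) :
  (forall x, A x = vadd (vscal (c1 x) u1) (vscal (c2 x) u2)) -> rank_le A 2.
Proof.
  intros H. exists (fun i => match i with O => u1 | _ => u2 end). intros x.
  exists (fun i => match i with O => c1 x | _ => c2 x end).
  rewrite H. simpl. rewrite vadd_zero_l. reflexivity.
Qed.

Lemma r1_rank2 f u : rank_le (r1 f u) 2.
Proof.
  apply (rank2_form _ u u f (fun _ => RtoC 0)). intros x. unfold r1.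
  rewrite vscal_0, vadd_zero. reflexivity.
Qed.

Lemma zero_rank k : rank_le (@op_zero X) k.
Proof.
  exists (fun _ => vzero). intros x. exists (fun _ => RtoC 0). unfold op_zero.
  induction k as [|k IH]; simpl; [reflexivity|]. rewrite <- IH, vscal_zero, vadd_zero. reflexivity.
Qed.

Lemma sandwich_rank1 (B A : op X) r s : in_BX B -> rank_le A 1 -> rank_le (sandwich r s B A) 1.
Proof.
  intros HB HA. destruct (rank1_form A HA) as [v Hv].
  apply (rank1_of_form _ (op_pow B r v)). intros x. unfold sandwich, op_comp.
  destruct (Hv (op_pow B s x)) as [c Ec]. exists c. rewrite Ec.
  apply (BX_lin _ (BX_pow B r HB)).
Qed.

End Operators.

(** ** Spectra of operators satisfying small polynomial identities *)

Section Spectrum.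
Context {X : CBanach}.

Lemma eig_spec (T : op X) z v : is_linear X T -> v <> vzero -> T v = vscal z v -> spectrum X T z.
Proof.
  intros HT Hv Hev [S [HS [H1 _]]]. apply Hv. specialize (H1 v). rewrite Hev, vadd_opp in H1.
  rewrite <- H1. apply lin_zero, BX_lin, HS.
Qed.

Lemma spectrum_nontrivial (T : op X) z : spectrum X T z -> exists x : X, x <> vzero.
Proof.
  intros Hs. apply NNPP. intros N. apply Hs. exists op_zero. split; [apply BX_zero|].
  assert (H : forall x : X, x = vzero) by (intros x; apply NNPP; intros Hx; apply N; exists x; exact Hx).
  split; intros x; rewrite (H x); [reflexivity| apply H].
Qed.

Lemma jacobson (A B : op X) z : in_BX A -> in_BX B -> z <> RtoC 0 ->
  spectrum X (op_comp A B) z -> spectrum X (op_comp B A) z.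
Proof.
  intros HA HB Hz Hs [W [HW [HW1 HW2]]]. apply Hs.
  destruct (BX_lin A HA) as [Aa As]. destruct (BX_lin B HB) as [Ba Bs].
  exists (op_scal (/ z) (op_add (fun x => x) (op_comp A (op_comp W B)))).
  split; [|split].
  - apply BX_scal, BX_add; [apply BX_id|]. apply BX_comp; [exact HA|]. apply BX_comp; assumption.
  - intros u. unfold op_scal, op_add, op_comp in *.
    rewrite Ba, Bs, (lin_opp B) by (split; assumption).
    rewrite HW1. vfield.
  - intros u. unfold op_scal, op_add, op_comp in *.
    set (q := W (B u)).
    assert (Hq : B (A q) = vadd (vscal z q) (vopp (B u))).
    { specialize (HW2 (B u)). fold q in HW2. rewrite <- HW2. vring. }
    assert (HBV : B (vscal (/ z) (vadd u (A q))) = q) by (rewrite Bs, Ba, Hq; vfield).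
    rewrite HBV. vfield.
Qed.

Lemma sandwich_spectrum (B A : op X) r s z : in_BX B -> in_BX A -> z <> RtoC 0 ->
  (spectrum X (sandwich r s B A) z <-> spectrum X (op_comp A (op_pow B (r + s))) z).
Proof.
  intros HB HA Hz.
  assert (E : op_comp (op_comp A (op_pow B s)) (op_pow B r) = op_comp A (op_pow B (r + s))).
  { apply functional_extensionality. intros x. unfold op_comp.
    rewrite Nat.add_comm, op_pow_add. reflexivity. }
  unfold sandwich. rewrite <- E. split; intros H.
  - apply jacobson; auto; [apply BX_pow; auto| apply BX_comp; [auto| apply BX_pow; auto]].
  - apply jacobson; auto; [apply BX_comp; [auto| apply BX_pow; auto]| apply BX_pow; auto].
Qed.

Lemma spectrum0_of_nilpotent (R : op X) : (exists x : X, x <> vzero) -> in_BX R ->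
  (forall x, R (R (R x)) = vzero) -> spectrum X R (RtoC 0).
Proof.
  intros [x0 Hx0] HR HRRR [S [HS [H1 H2]]]. apply Hx0.
  assert (E : forall x, x = vopp (R (S x))).
  { intros x. rewrite <- (H2 x) at 1. rewrite vscal_0, vadd_zero_l. reflexivity. }
  rewrite (E x0), (E (S x0)), (E (S (S x0))), !(lin_opp R) by exact (BX_lin R HR).
  rewrite HRRR, !vopp_scal, !vscal_zero. reflexivity.
Qed.

Lemma spectrum_of_quadratic (R : op X) (l z : C) : in_BX R ->
  (forall x, R (R x) = vscal l (R x)) -> spectrum X R z -> z = RtoC 0 \/ z = l.
Proof.
  intros HR HRR Hs. apply NNPP. intros N. apply Hs.
  assert (Hz : z <> RtoC 0) by tauto.
  assert (Hzl : z - l <> RtoC 0).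
  { intros E. apply N. right. replace z with ((z - l) + l) by ring. rewrite E. ring. }
  destruct (BX_lin R HR) as [Ra Rs].
  exists (op_scal (/ z) (op_add (fun x => x) (op_scal (/ (z - l)) R))). split; [|split].
  - apply BX_scal, BX_add; [apply BX_id| apply BX_scal; exact HR].
  - intros x. unfold op_scal, op_add. rewrite Ra, Rs, (lin_opp R), HRR by (split; assumption).
    vfield.
  - intros x. unfold op_scal, op_add. rewrite Rs, Ra, Rs, HRR. vfield.
Qed.

Lemma spectrum_of_cubic (N : op X) (m z : C) : in_BX N ->
  (forall x, N (N (N x)) = vscal (m * m) (N x)) ->
  spectrum X N z -> z = RtoC 0 \/ z = m \/ z = - m.
Proof.
  intros HN HNNN Hs. apply NNPP. intros Nn. apply Hs.
  assert (Hz : z <> RtoC 0) by tauto.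
  assert (Hzm : z * z - m * m <> RtoC 0).
  { intros E. apply Nn. right.
    assert (E2 : (z - m) * (z + m) = RtoC 0) by (rewrite <- E; ring).
    destruct (Cmult_integral _ _ E2) as [E3|E3]; [left|right].
    - replace z with ((z - m) + m) by ring. rewrite E3. ring.
    - replace z with ((z + m) - m) by ring. rewrite E3. ring. }
  destruct (BX_lin N HN) as [Na Ns].
  set (b := / (z * z - m * m)).
  exists (op_add (op_scal (/ z) (fun x => x))
            (op_add (op_scal b N) (op_scal (b / z) (op_comp N N)))).
  split; [|split].
  - apply BX_add; [apply BX_scal, BX_id|].
    apply BX_add; apply BX_scal; [exact HN| apply BX_comp; exact HN].
  - intros x. cbv [op_scal op_add op_comp]. rewrite !Na, !Ns, !(lin_opp N) by (split; assumption).
    rewrite HNNN. unfold b. vfield.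
  - intros x. cbv [op_scal op_add op_comp]. rewrite !Na, !Ns, ?Na, ?Ns, HNNN. unfold b. vfield.
Qed.

Lemma periph_ge (T : op X) z w : periph_spectrum T z -> spectrum X T w -> (Cmod w <= Cmod z)%R.
Proof. intros [_ [Hub _]] Hw. apply Hub. exists w. auto. Qed.

Lemma periph_of_two (T : op X) l1 l2 :
  (forall z, spectrum X T z -> z = RtoC 0 \/ z = l1 \/ z = l2) ->
  spectrum X T l1 -> spectrum X T l2 -> Cmod l1 = Cmod l2 ->
  periph_spectrum T l1 /\ periph_spectrum T l2.
Proof.
  intros Hsub H1 H2 Hm.
  assert (Hlub : is_spectral_radius X T (Cmod l1)).
  { split.
    - intros t [w [Hw ->]]. destruct (Hsub w Hw) as [ -> | [ -> | -> ] ].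
      + change (Cmod (RtoC 0) <= Cmod l1)%R. rewrite Cmod_0. apply Cmod_ge_0.
      + apply Rle_refl.
      + change (Cmod l2 <= Cmod l1)%R. rewrite Hm; apply Rle_refl.
    - intros b Hb. apply Hb. exists l1. auto. }
  split; split; auto. change (is_spectral_radius X T (Cmod l2)). rewrite <- Hm. exact Hlub.
Qed.

Lemma periph_singleton (R : op X) l :
  (forall z, spectrum X R z -> z = RtoC 0 \/ z = l) -> spectrum X R l ->
  forall z, periph_spectrum R z <-> z = l.
Proof.
  intros Hsub Hl z. split.
  - intros Hz. destruct (Hsub z (proj1 Hz)) as [ -> | -> ]; auto.
    pose proof (periph_ge R _ _ Hz Hl) as H. change (Cmod l <= Cmod (RtoC 0))%R in H.
    rewrite Cmod_0 in H. symmetry. apply Cmod_eq_0. pose proof (Cmod_ge_0 l). lra.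
  - intros ->. refine (proj1 (periph_of_two R l l _ Hl Hl eq_refl)).
    intros w Hw. destruct (Hsub w Hw); auto.
Qed.

Lemma periph_quadratic_unique (R : op X) l z z' : in_BX R ->
  (forall x, R (R x) = vscal l (R x)) ->
  periph_spectrum R z -> periph_spectrum R z' -> z = z'.
Proof.
  intros HR HRR H1 H2.
  assert (Hm : Cmod z = Cmod z').
  { apply Rle_antisym; [apply (periph_ge R z' z H2 (proj1 H1)) | apply (periph_ge R z z' H1 (proj1 H2))]. }
  destruct (spectrum_of_quadratic R l z HR HRR (proj1 H1)) as [ -> | -> ];
  destruct (spectrum_of_quadratic R l z' HR HRR (proj1 H2)) as [ -> | -> ]; auto.
  - rewrite Cmod_0 in Hm. symmetry in Hm. apply Cmod_eq_0 in Hm. auto.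
  - rewrite Cmod_0 in Hm. apply Cmod_eq_0 in Hm. auto.
Qed.

Lemma periph_rank1_unique (R : op X) z z' : in_BX R -> rank_le R 1 ->
  periph_spectrum R z -> periph_spectrum R z' -> z = z'.
Proof.
  intros HR Hr. destruct (rank1_form R Hr) as [v Hv]. destruct (Hv v) as [cv Ev].
  apply (periph_quadratic_unique R cv); auto.
  intros x. destruct (Hv x) as [c Ec]. rewrite Ec, (proj2 (BX_lin R HR)), Ev, !vscal_scal.
  f_equal. ring.
Qed.

Lemma periph_zero : (exists x : X, x <> vzero) ->
  forall z, periph_spectrum (@op_zero X) z <-> z = RtoC 0.
Proof.
  intros Hnt. apply periph_singleton.
  - intros z Hz. apply (spectrum_of_quadratic op_zero (RtoC 0) z (BX_zero)); auto.
    intros x. unfold op_zero. rewrite vscal_zero. reflexivity.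
  - apply spectrum0_of_nilpotent; [exact Hnt| apply BX_zero| intros x; reflexivity].
Qed.

End Spectrum.

Section Separation.
Context {X : CBanach}.

Definition indep2 (b1 b2 : X) : Prop :=
  forall a b, vadd (vscal a b1) (vscal b b2) = vzero -> a = RtoC 0 /\ b = RtoC 0.

Lemma indep2_nz (w1 w2 : X) : indep2 w1 w2 -> w1 <> vzero.
Proof.
  intros H E. destruct (H (RtoC 1) (RtoC 0)) as [E1 _].
  - rewrite E, vscal_zero, vscal_0, vadd_zero; reflexivity.
  - exact (C1_neq0 E1).
Qed.

Lemma indep2_of_not_multiple (u v : X) : u <> vzero -> ~ (exists c, v = vscal c u) -> indep2 u v.
Proof.
  intros Hu Hv a b E. destruct (Ceq_dec b (RtoC 0)) as [Eb|Eb].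
  - subst. rewrite vscal_0, vadd_zero in E. split; auto.
    apply NNPP; intros Ea. exact (Hu (vscal_inj a u E Ea)).
  - exfalso. apply Hv. exists (- a / b).
    assert (E2 : vscal b v = vscal (- a) u).
    { apply (vadd_cancel (vscal a u)). rewrite E. vring. }
    rewrite <- (vscal_1 v). replace (RtoC 1) with (/ b * b) by (field; auto).
    rewrite <- vscal_scal, E2, vscal_scal. f_equal. field. auto.
Qed.

Definition biorth (a1 a2 : X) f1 f2 : Prop :=
  is_functional f1 /\ is_functional f2 /\
  f1 a1 = RtoC 1 /\ f1 a2 = RtoC 0 /\ f2 a1 = RtoC 0 /\ f2 a2 = RtoC 1.

Lemma biorth_exists (w1 w2 : X) : indep2 w1 w2 -> exists d1 d2, biorth w1 w2 d1 d2.
Proof.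
  intros Hi. destruct (norming_functional w1 (indep2_nz w1 w2 Hi)) as [h1 [Hh1 Eh1]].
  set (w' := vadd w2 (vscal (- h1 w2) w1)).
  assert (Hw' : w' <> vzero).
  { intros E. destruct (Hi (- h1 w2) (RtoC 1)) as [_ E2].
    - rewrite <- E. unfold w'. vring.
    - exact (C1_neq0 E2). }
  destruct (norming_functional w' Hw') as [h2 [Hh2 Eh2]].
  assert (Hh1w' : h1 w' = RtoC 0).
  { unfold w'. destruct Hh1 as [fa [fs _]]. rewrite fa, fs, Eh1. ring. }
  set (d2 := fun x => h2 x + (- h2 w1) * h1 x).
  assert (Hd2 : is_functional d2) by (apply functional_add; [auto| apply functional_scal; auto]).
  assert (D2w1 : d2 w1 = RtoC 0) by (unfold d2; rewrite Eh1; ring).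
  assert (D2w2 : d2 w2 = RtoC 1).
  { replace w2 with (vadd w' (vscal (h1 w2) w1)) by (unfold w'; vring).
    destruct Hd2 as [fa [fs _]]. rewrite fa, fs, D2w1. unfold d2. rewrite Eh2, Hh1w'. ring. }
  exists (fun x => h1 x + (- h1 w2) * d2 x), d2. split; [|split; [|split; [|split; [|split]]]].
  - apply functional_add; [auto| apply functional_scal; auto].
  - exact Hd2.
  - simpl. rewrite Eh1, D2w1. ring.
  - simpl. rewrite D2w2. ring.
  - exact D2w1.
  - exact D2w2.
Qed.

(** If [u] is not in the span of [a1, a2] (written through the biorthogonal
    projection), some bounded functional vanishes at [a1, a2] and is 1 at [u]. *)
Lemma annihilating_functional (a1 a2 u : X) f1 f2 : biorth a1 a2 f1 f2 ->
  vadd u (vopp (vadd (vscal (f1 u) a1) (vscal (f2 u) a2))) <> vzero ->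
  exists g, is_functional g /\ g a1 = RtoC 0 /\ g a2 = RtoC 0 /\ g u = RtoC 1.
Proof.
  intros [Hf1 [Hf2 [E11 [E12 [E21 E22]]]]] Hw.
  destruct (norming_functional _ Hw) as [h [Hh Eh]].
  exists (fun x => h x + (- h a1) * f1 x + (- h a2) * f2 x). split; [|split; [|split]].
  - apply functional_add; [apply functional_add|]; [auto| apply functional_scal; auto| apply functional_scal; auto].
  - simpl. rewrite E11, E21. ring.
  - simpl. rewrite E12, E22. ring.
  - simpl. rewrite <- Eh. pose proof (functional_opp h) as Ho. destruct Hh as [fa [fs HB]].
    rewrite fa, Ho by (split; auto). rewrite fa, !fs. apply C_ext; simpl; ring.
Qed.

Lemma zero_of_functionals (T : op X) : is_linear X T ->
  (forall y g, is_functional g -> g y = RtoC 1 -> g (T y) = RtoC 0) -> forall y, T y = vzero.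
Proof.
  intros HT H y. apply NNPP. intros Hty.
  assert (Hy : y <> vzero) by (intros E; apply Hty; rewrite E; apply lin_zero; auto).
  destruct (classic (exists a, T y = vscal a y)) as [[a Ea]|Na].
  - destruct (norming_functional y Hy) as [g [Hg Eg]]. pose proof (H y g Hg Eg) as E.
    rewrite Ea, (proj1 (proj2 Hg)), Eg in E.
    apply Hty. rewrite Ea. replace a with (a * RtoC 1) by ring. rewrite E. apply vscal_0.
  - destruct (biorth_exists y (T y) (indep2_of_not_multiple y (T y) Hy Na))
      as [d1 [d2 [Hd1 [Hd2 [E1 [E2 [E3 E4]]]]]]].
    assert (Hg1 : d1 y + d2 y = RtoC 1) by (rewrite E1, E3; ring).
    pose proof (H y (fun x => d1 x + d2 x) (functional_add d1 d2 Hd1 Hd2) Hg1) as E.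
    simpl in E. rewrite E2, E4 in E. apply C1_neq0. rewrite <- E. ring.
Qed.

Lemma functional_witness_nonzero (T : op X) : is_linear X T -> T <> op_zero ->
  exists y g, is_functional g /\ g y = RtoC 1 /\ g (T y) <> RtoC 0.
Proof.
  intros HT Hn. apply NNPP. intros N. apply Hn. apply functional_extensionality.
  apply (zero_of_functionals T HT). intros y g Hg Hgy.
  apply NNPP. intros E. apply N. exists y, g. auto.
Qed.

Lemma not_rank1 (T : op X) : ~ rank_le T 1 -> exists u1 u2, indep2 (T u1) (T u2).
Proof.
  intros Hn. destruct (classic (forall x, T x = vzero)) as [Z|Z].
  - exfalso. apply Hn, (rank1_of_form T vzero). intros x. exists (RtoC 0).
    rewrite Z, vscal_zero. reflexivity.
  - apply not_all_ex_not in Z. destruct Z as [u1 Hu1].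
    destruct (classic (forall x, exists c, T x = vscal c (T u1))) as [A|A].
    + exfalso. exact (Hn (rank1_of_form T _ A)).
    + apply not_all_ex_not in A. destruct A as [u2 Hu2]. exists u1, u2.
      exact (indep2_of_not_multiple _ _ Hu1 Hu2).
Qed.

End Separation.

(** ** Peripheral spectra of sandwiches *)

Section Sandwiches.
Context {X : CBanach}.

(** For [g y = 1], the operator [P = g (.) y] is idempotent, so [P^k = P] for [k ≥ 1]. *)
Lemma r1_pow (g : X -> C) y k x : is_functional g -> g y = RtoC 1 -> (1 <= k)%nat ->
  op_pow (r1 g y) k x = r1 g y x.
Proof.
  intros [_ [gs _]] Hgy Hk. induction k as [|k IH]; [lia|]. destruct k as [|k]; [reflexivity|].
  change (r1 g y (op_pow (r1 g y) (S k) x) = r1 g y x).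
  rewrite IH by lia. unfold r1. rewrite gs, Hgy. f_equal. ring.
Qed.

Lemma periph_sandwich_idempotent (A : op X) (g : X -> C) (y : X) r s :
  (1 <= r + s)%nat -> in_BX A -> is_functional g -> g y = RtoC 1 ->
  forall z, periph_spectrum (sandwich r s (r1 g y) A) z <-> z = g (A y).
Proof.
  intros Hrs HA Hg Hgy.
  set (P := r1 g y). set (l := g (A y)).
  assert (HP : in_BX P) by (apply BX_r1; auto).
  assert (Hy : y <> vzero).
  { intros E. apply C1_neq0. rewrite <- Hgy, E. apply functional_zero, Hg. }
  destruct (BX_lin A HA) as [Aa As]. destruct Hg as [ga [gs gb]].
  set (N := op_comp A (op_pow P (r + s))).
  assert (HN : in_BX N) by (apply BX_comp; [auto| apply BX_pow; auto]).
  assert (Nx : forall x, N x = vscal (g x) (A y)).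
  { intros x. unfold N, op_comp, P. rewrite r1_pow by (repeat split; auto). apply As. }
  assert (NN : forall x, N (N x) = vscal l (N x)).
  { intros x. rewrite !Nx, gs, vscal_scal. fold l. f_equal. ring. }
  apply periph_singleton.
  - intros z Hz. destruct (Ceq_dec z (RtoC 0)) as [E|E]; [left; exact E| right].
    apply (sandwich_spectrum P A r s z HP HA E) in Hz.
    destruct (spectrum_of_quadratic N l z HN NN Hz) as [E2|E2]; [contradiction| exact E2].
  - destruct (Ceq_dec l (RtoC 0)) as [Hl|Hl].
    + (* l = 0: the sandwich is nilpotent *)
      rewrite Hl. apply spectrum0_of_nilpotent; [exists y; exact Hy| apply BX_sandwich; auto|].
      assert (Key : forall v, A (op_pow P s (op_pow P r v)) = vscal (g v) (A y)).
      { intros v. rewrite <- op_pow_add, Nat.add_comm. apply Nx. }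
      intros x. unfold sandwich, op_comp.
      rewrite (Key (A (op_pow P s (op_pow P r (A (op_pow P s x)))))), (Key (A (op_pow P s x))), gs.
      fold l. rewrite Hl, Cmult_0_r, vscal_0. apply lin_zero, BX_lin, BX_pow, HP.
    + apply (sandwich_spectrum P A r s l HP HA Hl).
      apply (eig_spec N l (A y)); [apply BX_lin; auto| |apply Nx].
      intros E. apply Hl. unfold l. rewrite E. apply functional_zero. repeat split; auto.
Qed.

(** A trace-free operator on a plane [span(b1, b2)] with determinant [-m^2]
    has eigenvalue [m]. *)
Lemma plane_eigenvalue (N : op X) b1 b2 k11 k12 k21 m : in_BX N -> indep2 b1 b2 ->
  N b1 = vadd (vscal k11 b1) (vscal k21 b2) ->
  N b2 = vadd (vscal k12 b1) (vscal (- k11) b2) ->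
  m * m = k11 * k11 + k12 * k21 -> m <> RtoC 0 -> spectrum X N m.
Proof.
  intros HN Hind H1 H2 Hm Hm0. destruct (BX_lin N HN) as [Na Ns].
  assert (Hk : k12 * k21 = m * m - k11 * k11) by (rewrite Hm; ring).
  destruct (classic (k12 = RtoC 0 /\ m - k11 = RtoC 0)) as [[E1 E2]|NE].
  - apply (eig_spec N m (vadd (vscal (m + k11) b1) (vscal k21 b2))); [split; auto| |].
    + intros E. destruct (Hind _ _ E) as [E3 _]. apply Hm0.
      assert (H2n : RtoC 2 <> RtoC 0) by (apply Cneq; lra).
      replace m with (((m + k11) + (m - k11)) / RtoC 2) by (field; exact H2n).
      rewrite E3, E2. field.
    + rewrite Na, !Ns, H1, H2.
      transitivity (vadd (vscal (m * (m + k11) + (k11 * k11 + k12 * k21 - m * m)) b1)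
                         (vscal (m * k21) b2)); [vring|].
      rewrite Hk. vring.
  - apply (eig_spec N m (vadd (vscal k12 b1) (vscal (m - k11) b2))); [split; auto| |].
    + intros E. destruct (Hind _ _ E) as [E3 E4]. apply NE. auto.
    + rewrite Na, !Ns, H1, H2.
      transitivity (vadd (vscal (m * k12) b1) (vscal (k12 * k21 + k11 * k11 - m * k11) b2)); [vring|].
      rewrite Hk. vring.
Qed.

(** Cayley–Hamilton for such an operator whose range lies in the plane. *)
Lemma plane_cubic (N : op X) b1 b2 k11 k12 k21 m : in_BX N ->
  (forall x, exists c1 c2, N x = vadd (vscal c1 b1) (vscal c2 b2)) ->
  N b1 = vadd (vscal k11 b1) (vscal k21 b2) ->
  N b2 = vadd (vscal k12 b1) (vscal (- k11) b2) ->
  m * m = k11 * k11 + k12 * k21 -> forall x, N (N (N x)) = vscal (m * m) (N x).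
Proof.
  intros HN Hr H1 H2 Hm x. destruct (BX_lin N HN) as [Na Ns].
  destruct (Hr x) as [c1 [c2 E]]. rewrite E, !Na, !Ns, H1, H2, !Na, !Ns, H1, H2, Hm. vring.
Qed.

Lemma periph_plus_minus (B A : op X) r s b1 b2 k11 k12 k21 m :
  in_BX B -> in_BX A -> indep2 b1 b2 ->
  (forall x, exists c1 c2, A (op_pow B (r + s) x) = vadd (vscal c1 b1) (vscal c2 b2)) ->
  A (op_pow B (r + s) b1) = vadd (vscal k11 b1) (vscal k21 b2) ->
  A (op_pow B (r + s) b2) = vadd (vscal k12 b1) (vscal (- k11) b2) ->
  m * m = k11 * k11 + k12 * k21 -> m <> RtoC 0 ->
  periph_spectrum (sandwich r s B A) m /\ periph_spectrum (sandwich r s B A) (- m).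
Proof.
  intros HB HA Hind Hr H1 H2 Hm Hm0.
  set (N := op_comp A (op_pow B (r + s))).
  assert (HN : in_BX N) by (apply BX_comp; [auto| apply BX_pow; auto]).
  assert (Hm0' : - m <> RtoC 0) by (intros E; apply Hm0; replace m with (- - m) by ring; rewrite E; ring).
  apply periph_of_two.
  - intros z Hz. destruct (Ceq_dec z (RtoC 0)) as [E|E]; [left; exact E| right].
    apply (sandwich_spectrum B A r s z HB HA E) in Hz.
    destruct (spectrum_of_cubic N m z HN (plane_cubic N b1 b2 k11 k12 k21 m HN Hr H1 H2 Hm) Hz)
      as [E2|E2]; [contradiction|exact E2].
  - apply (sandwich_spectrum B A r s m HB HA Hm0). apply (plane_eigenvalue N b1 b2 k11 k12 k21); auto.
  - apply (sandwich_spectrum B A r s (- m) HB HA Hm0').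
    apply (plane_eigenvalue N b1 b2 k11 k12 k21 (- m)); auto. rewrite <- Hm. ring.
  - symmetry. apply Cmod_opp.
Qed.

Lemma periph_pm_of_power (B : op X) r s : in_BX B -> ~ rank_le (op_pow B (r + s)) 1 ->
  exists A, in_BX A /\ rank_le A 2 /\ exists m, m <> RtoC 0 /\
    periph_spectrum (sandwich r s B A) m /\ periph_spectrum (sandwich r s B A) (- m).
Proof.
  intros HB Hn. set (Bn := op_pow B (r + s)).
  assert (HBn : in_BX Bn) by (apply BX_pow; auto).
  destruct (not_rank1 Bn Hn) as [u1 [u2 Hi]].
  destruct (biorth_exists _ _ Hi) as [d1 [d2 [Hd1 [Hd2 [E1 [E2 [E3 E4]]]]]]].
  set (A := op_add (r1 d1 u1) (r1 (fun x => RtoC (-1) * d2 x) u2)).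
  assert (HA : in_BX A) by (apply BX_add; apply BX_r1; [auto| apply functional_scal; auto]).
  exists A. split; [exact HA|]. split.
  - apply (rank2_form A u1 u2 d1 (fun x => RtoC (-1) * d2 x)). intros x. reflexivity.
  - exists (RtoC 1). split; [apply C1_neq0|].
    destruct (BX_lin Bn HBn) as [Ba Bs].
    apply (periph_plus_minus B A r s u1 u2 (RtoC 1) (RtoC 0) (RtoC 0) (RtoC 1)); auto.
    + intros a b E. apply Hi. rewrite <- (lin_zero Bn) by (split; auto). rewrite <- E, Ba, !Bs. reflexivity.
    + intros x. exists (d1 (op_pow B (r + s) x)), (RtoC (-1) * d2 (op_pow B (r + s) x)). reflexivity.
    + unfold A, op_add, r1. fold Bn. rewrite E1, E3. vring.
    + unfold A, op_add, r1. fold Bn. rewrite E2, E4. vring.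
    + ring.
    + apply C1_neq0.
Qed.

Lemma power_rank1_of_periph_unique (B : op X) r s : in_BX B ->
  (forall A, in_BX A -> rank_le A 2 -> forall z z',
     periph_spectrum (sandwich r s B A) z -> periph_spectrum (sandwich r s B A) z' -> z = z') ->
  rank_le (op_pow B (r + s)) 1.
Proof.
  intros HB Huniq. apply NNPP. intros Hn.
  destruct (periph_pm_of_power B r s HB Hn) as [A [HA [HA2 [m [Hm0 [Pm Pm']]]]]].
  exact (Hm0 (C_eq_opp m (Huniq A HA HA2 _ _ Pm Pm'))).
Qed.

Lemma periph_sandwich_rank1_power (B C : op X) r s v l mu : in_BX B -> in_BX C ->
  (forall x, exists c, op_pow B (r + s) x = vscal c v) ->
  op_pow B (r + s) (C v) = vscal l v -> (l <> RtoC 0 -> C v <> vzero) ->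
  periph_spectrum (sandwich r s B C) mu -> mu = l.
Proof.
  intros HB HC Hv El HCv Pm. destruct (BX_lin C HC) as [Ca Cs].
  destruct (BX_lin _ (BX_pow B (r + s) HB)) as [_ Bs].
  set (N := op_comp C (op_pow B (r + s))).
  assert (HN : in_BX N) by (apply BX_comp; [auto| apply BX_pow; auto]).
  assert (NN : forall x, N (N x) = vscal l (N x)).
  { intros x. unfold N, op_comp. destruct (Hv x) as [c Ec].
    rewrite Ec, !Cs, Bs, El, !Cs, !vscal_scal. f_equal. ring. }
  destruct (Ceq_dec mu (RtoC 0)) as [E|E].
  - (* mu = 0 forces l = 0: otherwise l would be a larger spectral value *)
    destruct (Ceq_dec l (RtoC 0)) as [El0|El0]; [rewrite E, El0; reflexivity|].
    exfalso. apply El0.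
    assert (Sl : spectrum X N l).
    { apply (eig_spec N l (C v)); [apply BX_lin; exact HN| exact (HCv El0)|].
      unfold N, op_comp. rewrite El, Cs. reflexivity. }
    apply (sandwich_spectrum B C r s l HB HC El0) in Sl.
    pose proof (periph_ge _ _ _ Pm Sl) as Hle. rewrite E, Cmod_0 in Hle.
    apply Cmod_eq_0. pose proof (Cmod_ge_0 l). lra.
  - apply proj1, (sandwich_spectrum B C r s mu HB HC E) in Pm.
    destruct (spectrum_of_quadratic N l mu HN NN Pm) as [E2|E2]; [contradiction| exact E2].
Qed.

Lemma periph_pm_rank1 (B A : op X) r s m : in_BX B -> in_BX A -> rank_le A 1 ->
  periph_spectrum (sandwich r s B A) m -> periph_spectrum (sandwich r s B A) (- m) -> m = RtoC 0.
Proof.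
  intros HB HA Hr Pm Pm'. apply C_eq_opp.
  exact (periph_rank1_unique _ _ _ (BX_sandwich B A r s HB HA) (sandwich_rank1 B A r s HB Hr) Pm Pm').
Qed.

End Sandwiches.

(** ** Operators of rank at least two *)

(** Two complex numbers can always be avoided (take a real of larger modulus). *)
Lemma avoid_two (a b : C) : exists c, c <> a /\ c <> b.
Proof.
  exists (RtoC (Cmod a + Cmod b + 1)).
  pose proof (Cmod_ge_0 a). pose proof (Cmod_ge_0 b).
  split; intros E; [assert (Cmod (RtoC (Cmod a + Cmod b + 1)) = Cmod a) by now rewrite E
                   |assert (Cmod (RtoC (Cmod a + Cmod b + 1)) = Cmod b) by now rewrite E];
    rewrite Cmod_R, Rabs_right in H1; lra.
Qed.

Lemma shear_choice (m11 m12 m21 m22 : C) : m11 * m22 - m12 * m21 <> RtoC 0 ->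
  exists c, m11 + c * m12 <> RtoC 0 /\ m22 - c * m12 <> RtoC 0.
Proof.
  intros D. destruct (Ceq_dec m12 (RtoC 0)) as [Z|Z].
  - exists (RtoC 0). rewrite Z in *. split; intros E; apply D.
    + replace m11 with (m11 + RtoC 0 * RtoC 0) by ring. rewrite E. ring.
    + replace m22 with (m22 - RtoC 0 * RtoC 0) by ring. rewrite E. ring.
  - destruct (avoid_two (- m11 / m12) (m22 / m12)) as [c [C1 C2]].
    exists c. split; intros E.
    + apply C1. replace c with ((m11 + c * m12 - m11) / m12) by (field; exact Z).
      rewrite E. field. exact Z.
    + apply C2. replace c with ((m22 - (m22 - c * m12)) / m12) by (field; exact Z).
      rewrite E. field. exact Z.
Qed.

Section RankTwo.
Context {X : CBanach}.

Lemma biorth_add_l (a1 a2 : X) f1 f2 g : biorth a1 a2 f1 f2 -> is_functional g ->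
  g a1 = RtoC 0 -> g a2 = RtoC 0 -> biorth a1 a2 (fun x => f1 x + g x) f2.
Proof.
  intros [Hf1 [Hf2 [E11 [E12 [E21 E22]]]]] Hg G1 G2.
  split; [apply functional_add; auto|]. split; [exact Hf2|]. simpl.
  rewrite E11, E12, G1, G2. refine (conj _ (conj _ (conj E21 E22))); ring.
Qed.

Lemma biorth_add_r (a1 a2 : X) f1 f2 g : biorth a1 a2 f1 f2 -> is_functional g ->
  g a1 = RtoC 0 -> g a2 = RtoC 0 -> biorth a1 a2 f1 (fun x => f2 x + g x).
Proof.
  intros [Hf1 [Hf2 [E11 [E12 [E21 E22]]]]] Hg G1 G2.
  split; [exact Hf1|]. split; [apply functional_add; auto|]. simpl.
  rewrite E21, E22, G1, G2. refine (conj E11 (conj E12 (conj _ _))); ring.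
Qed.

Lemma annihilator_at (a1 a2 b : X) f1 f2 : biorth a1 a2 f1 f2 -> b <> vzero ->
  f1 b = RtoC 0 -> f2 b = RtoC 0 ->
  exists g, is_functional g /\ g a1 = RtoC 0 /\ g a2 = RtoC 0 /\ g b = RtoC 1.
Proof.
  intros Bo Hb F1 F2. apply (annihilating_functional a1 a2 b f1 f2 Bo).
  rewrite F1, F2, !vscal_0, vadd_zero, vopp_scal, vscal_zero, vadd_zero. exact Hb.
Qed.

Lemma biorth_fix_singular (a1 a2 b1 b2 : X) f1 f2 : biorth a1 a2 f1 f2 -> indep2 b1 b2 ->
  f1 b1 * f2 b2 - f1 b2 * f2 b1 = RtoC 0 ->
  ~ (f1 b1 = RtoC 0 /\ f1 b2 = RtoC 0 /\ f2 b1 = RtoC 0 /\ f2 b2 = RtoC 0) ->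
  exists g1 g2, biorth a1 a2 g1 g2 /\ g1 b1 * g2 b2 - g1 b2 * g2 b1 <> RtoC 0.
Proof.
  intros Bo Hi Hdet Hnz. pose proof Bo as [Hf1 [Hf2 _]].
  set (m11 := f1 b1) in *. set (m12 := f1 b2) in *. set (m21 := f2 b1) in *. set (m22 := f2 b2) in *.
  destruct (classic (m11 = RtoC 0 /\ m12 = RtoC 0)) as [[Z1 Z2]|Row1].
  - (* first row zero: b = -m22 b1 + m21 b2 spans the kernel; correct f1 *)
    set (b := vadd (vscal (- m22) b1) (vscal m21 b2)).
    assert (Hb : b <> vzero).
    { intros E. destruct (Hi _ _ E) as [Ea Eb]. apply Hnz. repeat split; auto.
      replace m22 with (- - m22) by ring. rewrite Ea. ring. }
    destruct (annihilator_at a1 a2 b f1 f2 Bo Hb) as [g [Hg [Ga1 [Ga2 Gb]]]].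
    { unfold b. rewrite functional_lc by auto. fold m11 m12. rewrite Z1, Z2. ring. }
    { unfold b. rewrite functional_lc by auto. fold m21 m22. ring. }
    exists (fun x => f1 x + g x), f2. split; [apply biorth_add_l; auto|].
    simpl. fold m11 m12 m21 m22. rewrite Z1, Z2.
    unfold b in Gb. rewrite functional_lc in Gb by auto.
    replace ((RtoC 0 + g b1) * m22 - (RtoC 0 + g b2) * m21) with (- (- m22 * g b1 + m21 * g b2)) by ring.
    rewrite Gb. intros E. apply C1_neq0. replace (RtoC 1) with (- - RtoC 1) by ring. rewrite E. ring.
  - (* otherwise b = -m12 b1 + m11 b2 spans the kernel; correct f2 *)
    set (b := vadd (vscal (- m12) b1) (vscal m11 b2)).
    assert (Hb : b <> vzero).
    { intros E. destruct (Hi _ _ E) as [Ea Eb]. apply Row1. split; auto.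
      replace m12 with (- - m12) by ring. rewrite Ea. ring. }
    destruct (annihilator_at a1 a2 b f1 f2 Bo Hb) as [g [Hg [Ga1 [Ga2 Gb]]]].
    { unfold b. rewrite functional_lc by auto. fold m12 m11. ring. }
    { unfold b. rewrite functional_lc by auto. fold m21 m22. rewrite <- Hdet. ring. }
    exists f1, (fun x => f2 x + g x). split; [apply biorth_add_r; auto|].
    simpl. fold m11 m12 m21 m22.
    unfold b in Gb. rewrite functional_lc in Gb by auto.
    replace (m11 * (m22 + g b2) - m12 * (m21 + g b1))
      with ((m11 * m22 - m12 * m21) + (- m12 * g b1 + m11 * g b2)) by ring.
    rewrite Gb, Hdet. replace (RtoC 0 + RtoC 1) with (RtoC 1) by ring. apply C1_neq0.
Qed.

Lemma biorth_nonsingular (a1 a2 b1 b2 : X) : indep2 a1 a2 -> indep2 b1 b2 ->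
  exists f1 f2, biorth a1 a2 f1 f2 /\ f1 b1 * f2 b2 - f1 b2 * f2 b1 <> RtoC 0.
Proof.
  intros Ha Hb. destruct (biorth_exists _ _ Ha) as [f1 [f2 Bo]].
  destruct (classic (f1 b1 * f2 b2 - f1 b2 * f2 b1 = RtoC 0)) as [D|D]; [|exists f1, f2; auto].
  destruct (classic (f1 b1 = RtoC 0 /\ f1 b2 = RtoC 0 /\ f2 b1 = RtoC 0 /\ f2 b2 = RtoC 0))
    as [[Z1 [Z2 [Z3 Z4]]]|NZ]; [|exact (biorth_fix_singular a1 a2 b1 b2 f1 f2 Bo Hb D NZ)].
  (* zero matrix: first make the (1,1) entry equal to 1 *)
  destruct (annihilator_at a1 a2 b1 f1 f2 Bo (indep2_nz b1 b2 Hb) Z1 Z3) as [g [Hg [Ga1 [Ga2 Gb]]]].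
  pose proof (biorth_add_l a1 a2 f1 f2 g Bo Hg Ga1 Ga2) as Bo'.
  destruct (classic ((f1 b1 + g b1) * f2 b2 - (f1 b2 + g b2) * f2 b1 = RtoC 0)) as [D'|D'];
    [|exists (fun x => f1 x + g x), f2; auto].
  apply (biorth_fix_singular a1 a2 b1 b2 _ _ Bo' Hb D').
  simpl. rewrite Z1, Gb. intros [E _]. apply C1_neq0. rewrite <- E. ring.
Qed.

Definition det_on (T : op X) (a1 a2 : X) (g1 g2 : X -> C) : C :=
  g1 (T a1) * g2 (T a2) - g1 (T a2) * g2 (T a1).

Lemma rank2_normal_form (T : op X) : in_BX T -> ~ rank_le T 1 ->
  exists a1 a2 g1 g2, biorth a1 a2 g1 g2 /\ det_on T a1 a2 g1 g2 <> RtoC 0 /\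
    g1 (T a1) <> RtoC 0 /\ g2 (T a2) <> RtoC 0.
Proof.
  intros HT Hn. destruct (BX_lin T HT) as [Ta Ts].
  destruct (not_rank1 T Hn) as [u1 [u2 Hi]].
  assert (Hu : indep2 u1 u2).
  { intros a b E. apply Hi. rewrite <- Ts, <- Ts, <- Ta, E. apply lin_zero. split; auto. }
  destruct (biorth_nonsingular u1 u2 (T u1) (T u2) Hu Hi)
    as [f1 [f2 [[Hf1 [Hf2 [E11 [E12 [E21 E22]]]]] D]]].
  destruct (shear_choice _ _ _ _ D) as [c [C1 C2]].
  exists (vadd u1 (vscal c u2)), u2, f1, (fun x => f2 x + (- c) * f1 x).
  assert (Ea : T (vadd u1 (vscal c u2)) = vadd (vscal (RtoC 1) (T u1)) (vscal c (T u2))).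
  { rewrite Ta, Ts, vscal_1. reflexivity. }
  assert (Hf2' : is_functional (fun x => f2 x + (- c) * f1 x))
    by (apply functional_add; [auto| apply functional_scal; auto]).
  split; [|unfold det_on; simpl; rewrite Ea, !functional_lc by auto; split; [|split]].
  - split; [exact Hf1|]. split; [exact Hf2'|].
    rewrite <- (vscal_1 u1). simpl. rewrite !functional_lc by auto.
    rewrite E11, E12, E21, E22. refine (conj _ (conj _ (conj _ _))); ring.
  - intros E. apply D. rewrite <- E. ring.
  - intros E. apply C1. rewrite <- E. ring.
  - intros E. apply C2. rewrite <- E. ring.
Qed.

Lemma biorth_op_pow (a1 a2 : X) g1 g2 k j x : biorth a1 a2 g1 g2 -> (1 <= j)%nat ->
  op_pow (op_add (r1 g1 a1) (r1 (fun x => k * g2 x) a2)) j x =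
  vadd (vscal (g1 x) a1) (vscal (Cpow k j * g2 x) a2).
Proof.
  intros [Hg1 [Hg2 [E11 [E12 [E21 E22]]]]] Hj. induction j as [|j IH]; [lia|].
  destruct j as [|j].
  - unfold op_pow. simpl. unfold op_add, r1. f_equal. f_equal. ring.
  - change (op_add (r1 g1 a1) (r1 (fun x => k * g2 x) a2)
              (op_pow (op_add (r1 g1 a1) (r1 (fun x => k * g2 x) a2)) (S j) x)
            = vadd (vscal (g1 x) a1) (vscal (Cpow k (S (S j)) * g2 x) a2)).
    rewrite IH by lia. unfold op_add, r1. rewrite !functional_lc by auto.
    rewrite E11, E12, E21, E22. simpl Cpow. f_equal; f_equal; ring.
Qed.

Lemma indep2_of_det (b1 b2 : X) g1 g2 : is_functional g1 -> is_functional g2 ->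
  g1 b1 * g2 b2 - g1 b2 * g2 b1 <> RtoC 0 -> indep2 b1 b2.
Proof.
  intros Hg1 Hg2 D a b E.
  assert (F1 : a * g1 b1 + b * g1 b2 = RtoC 0).
  { rewrite <- functional_lc, E by auto. apply functional_zero; auto. }
  assert (F2 : a * g2 b1 + b * g2 b2 = RtoC 0).
  { rewrite <- functional_lc, E by auto. apply functional_zero; auto. }
  split; apply NNPP; intros Nz; apply D.
  - replace (g1 b1 * g2 b2 - g1 b2 * g2 b1)
      with (/ a * (g2 b2 * (a * g1 b1 + b * g1 b2) - g1 b2 * (a * g2 b1 + b * g2 b2))) by (field; auto).
    rewrite F1, F2. ring.
  - replace (g1 b1 * g2 b2 - g1 b2 * g2 b1)
      with (/ b * (g1 b1 * (a * g2 b1 + b * g2 b2) - g2 b1 * (a * g1 b1 + b * g1 b2))) by (field; auto).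
    rewrite F1, F2. ring.
Qed.

(** With the
    normal form above, [S = g1 (.) a1 + k g2 (.) a2] where
    [k^(r+s) = - m11 / m22] makes [T S^(r+s)] trace-free on [span(T a1, T a2)]. *)
Lemma periph_pm_of_not_rank1 (T : op X) r s : (1 <= r + s)%nat -> in_BX T -> ~ rank_le T 1 ->
  exists S, in_BX S /\ rank_le S 2 /\ exists m, m <> RtoC 0 /\
    periph_spectrum (sandwich r s S T) m /\ periph_spectrum (sandwich r s S T) (- m).
Proof.
  intros Hrs HT Hn. destruct (BX_lin T HT) as [Ta Ts].
  destruct (rank2_normal_form T HT Hn) as [a1 [a2 [g1 [g2 [Bo [D [N1 N2]]]]]]].
  pose proof Bo as [Hg1 [Hg2 _]]. unfold det_on in D.
  set (m11 := g1 (T a1)) in *. set (m12 := g1 (T a2)) in *.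
  set (m21 := g2 (T a1)) in *. set (m22 := g2 (T a2)) in *.
  set (t := - m11 / m22).
  destruct (C_nth_root (r + s) t Hrs) as [k Hk].
  set (S := op_add (r1 g1 a1) (r1 (fun x => k * g2 x) a2)).
  assert (HS : in_BX S) by (apply BX_add; apply BX_r1; [auto| apply functional_scal; auto]).
  exists S. split; [exact HS|].
  split; [apply (rank2_form S a1 a2 g1 (fun x => k * g2 x)); reflexivity|].
  set (q := m11 * m11 + m12 * (t * m21)).
  assert (Hq : q <> RtoC 0).
  { intros E. apply D.
    assert (E2 : m11 * ((m11 * m22 - m12 * m21) / m22) = RtoC 0) by (rewrite <- E; unfold q, t; field; auto).
    destruct (Cmult_integral _ _ E2) as [E3|E3]; [contradiction|].
    replace (m11 * m22 - m12 * m21) with (((m11 * m22 - m12 * m21) / m22) * m22) by (field; auto).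
    rewrite E3. ring. }
  destruct (C_nth_root 2 q ltac:(lia)) as [m Hm]. simpl in Hm.
  assert (Hm' : m * m = q) by (rewrite <- Hm; ring).
  assert (Hm0 : m <> RtoC 0) by (intros E; apply Hq; rewrite <- Hm', E; ring).
  exists m. split; [exact Hm0|].
  apply (periph_plus_minus S T r s (T a1) (T a2) m11 m12 (t * m21) m); auto.
  - apply (indep2_of_det _ _ g1 g2); auto.
  - intros x. unfold S. rewrite biorth_op_pow, Hk, Ta, !Ts by auto.
    exists (g1 x), (t * g2 x). reflexivity.
  - unfold S. rewrite biorth_op_pow, Hk, Ta, !Ts by auto. fold m11 m21. reflexivity.
  - unfold S. rewrite biorth_op_pow, Hk, Ta, !Ts by auto. fold m12 m22.
    f_equal; f_equal. unfold t. field. auto.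
Qed.

End RankTwo.

Section Preserver.
Variables (X1 X2 : CBanach) (A1 : op X1 -> Prop) (A2 : op X2 -> Prop).
Variables (r s : nat) (Phi : op X1 -> op X2).
Hypothesis hA1 : standard_op_alg A1.
Hypothesis hA2 : standard_op_alg A2.
Hypothesis hrs : (1 <= r + s)%nat.
Hypothesis hmaps : forall A, A1 A -> A2 (Phi A).
Hypothesis hsurj2 : forall T, in_BX T -> rank_le T 2 -> exists A, A1 A /\ Phi A = T.
Hypothesis hpres : forall A B, A1 A -> A1 B -> forall z,
  periph_spectrum (sandwich r s B A) z <-> periph_spectrum (sandwich r s (Phi B) (Phi A)) z.

Lemma A1_bounded A : A1 A -> in_BX A.
Proof. apply (proj1 hA1). Qed.

Lemma Phi_bounded A : A1 A -> in_BX (Phi A).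
Proof. intros HA. apply (proj1 hA2), hmaps, HA. Qed.

Lemma A1_of_rank2 T : in_BX T -> rank_le T 2 -> A1 T.
Proof. intros HT Hr. apply (proj1 (proj2 hA1)); auto. exists 2%nat. exact Hr. Qed.

Lemma A1_lc a b A B : A1 A -> A1 B -> A1 (op_add (op_scal a A) (op_scal b B)).
Proof.
  destruct hA1 as [_ [_ [Hadd [Hsc _]]]]. intros HA HB. apply Hadd; apply Hsc; auto.
Qed.

Lemma idempotent_preimage y g : is_functional g -> g y = RtoC 1 ->
  exists B, A1 B /\ forall A, A1 A -> forall z,
    periph_spectrum (sandwich r s B A) z <-> z = g (Phi A y).
Proof.
  intros Hg Hgy. destruct (hsurj2 (r1 g y) (BX_r1 g y Hg) (r1_rank2 g y)) as [B [AB EB]].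
  exists B. split; [exact AB|]. intros A AA z.
  rewrite (hpres A B AA AB z), EB.
  apply periph_sandwich_idempotent; auto using Phi_bounded.
Qed.

(** [Φ(0) = 0]: for each idempotent as above, σπ(B^r 0 B^s) = {0}. *)
Lemma Phi_zero : Phi op_zero = op_zero.
Proof.
  assert (Z1 : A1 op_zero) by (apply A1_of_rank2; [apply BX_zero| apply zero_rank]).
  apply functional_extensionality, zero_of_functionals; [apply BX_lin, Phi_bounded, Z1|].
  intros y g Hg Hgy. destruct (idempotent_preimage y g Hg Hgy) as [B [AB HB]].
  pose proof (proj2 (HB op_zero Z1 _) eq_refl) as P.
  rewrite sandwich_zero in P by (apply A1_bounded, AB).
  exact (proj1 (periph_zero (spectrum_nontrivial _ _ (proj1 P)) _) P).
Qed.

(** [Φ] vanishes only at 0: a nonzero [A] is detected by an idempotent [P]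
    with [g (A y) ∈ σπ(P^r A P^s)]. *)
Lemma Phi_eq_zero A : A1 A -> Phi A = op_zero -> A = op_zero.
Proof.
  intros AA E. apply NNPP. intros Hn.
  destruct (functional_witness_nonzero A (BX_lin A (A1_bounded A AA)) Hn)
    as [y [g [Hg [Hgy Hne]]]].
  assert (AP : A1 (r1 g y)) by (apply A1_of_rank2; [apply BX_r1, Hg| apply r1_rank2]).
  pose proof (proj2 (periph_sandwich_idempotent A g y r s hrs (A1_bounded A AA) Hg Hgy _) eq_refl)
    as P.
  apply (proj1 (hpres A _ AA AP _)) in P.
  rewrite E, sandwich_zero in P by (apply Phi_bounded, AP).
  exact (Hne (proj1 (periph_zero (spectrum_nontrivial _ _ (proj1 P)) _) P)).
Qed.

Lemma Phi_functional_linear y g a b A A' : is_functional g -> g y = RtoC 1 -> A1 A -> A1 A' ->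
  g (Phi (op_add (op_scal a A) (op_scal b A')) y) = a * g (Phi A y) + b * g (Phi A' y).
Proof.
  intros Hg Hgy AA AA'. destruct (idempotent_preimage y g Hg Hgy) as [B [AB HB]].
  pose proof (A1_bounded B AB) as HBB. set (Bn := op_pow B (r + s)).
  assert (Hr : rank_le Bn 1).
  { apply (power_rank1_of_periph_unique B r s HBB). intros C HC HC2 z z' Pz Pz'.
    pose proof (A1_of_rank2 C HC HC2) as AC.
    rewrite (HB C AC) in Pz, Pz'. congruence. }
  destruct (rank1_form Bn Hr) as [v Hv].
  assert (Hval : forall C, A1 C -> forall l, Bn (C v) = vscal l v ->
             (l <> RtoC 0 -> C v <> vzero) -> g (Phi C y) = l).
  { intros C AC l El HCv. apply (periph_sandwich_rank1_power B C r s v l); auto using A1_bounded.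
    apply (HB C AC). reflexivity. }
  pose proof (BX_lin Bn (BX_pow B (r + s) HBB)) as HBn.
  destruct (classic (v = vzero)) as [Ev|Ev].
  - (* B^(r+s) = 0: every value is 0 *)
    assert (Z : forall C, A1 C -> g (Phi C y) = RtoC 0).
    { intros C AC. apply (Hval C AC); [|intros []; reflexivity].
      rewrite Ev, lin_zero, vscal_zero by apply (BX_lin C (A1_bounded C AC)).
      apply lin_zero, HBn. }
    rewrite !Z by auto using A1_lc. ring.
  - (* B^(r+s) (C v) = l_C v, and l_C is linear in C since v ≠ 0 *)
    assert (Hval' : forall C, A1 C -> forall l, Bn (C v) = vscal l v -> g (Phi C y) = l).
    { intros C AC l El. apply (Hval C AC l El). intros Hl E.
      rewrite E, lin_zero in El by exact HBn. symmetry in El. exact (Ev (vscal_inj l v El Hl)). }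
    destruct (Hv (A v)) as [lA ElA]. destruct (Hv (A' v)) as [lA' ElA'].
    rewrite (Hval' A AA lA ElA), (Hval' A' AA' lA' ElA').
    apply (Hval' _ (A1_lc a b A A' AA AA')).
    unfold op_add, op_scal. destruct HBn as [Ba Bs]. rewrite Ba, !Bs, ElA, ElA'. vring.
Qed.

(** Linearity of [Φ]: functionals separate the values of both sides. *)
Lemma Phi_linear a b A B : A1 A -> A1 B ->
  Phi (op_add (op_scal a A) (op_scal b B)) = op_add (op_scal a (Phi A)) (op_scal b (Phi B)).
Proof.
  intros AA AB. set (L := op_add (op_scal a (Phi A)) (op_scal b (Phi B))).
  set (D := op_add (Phi (op_add (op_scal a A) (op_scal b B))) (op_scal (RtoC (-1)) L)).
  assert (HD : in_BX D).
  { apply BX_add; [apply Phi_bounded, A1_lc; auto|].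
    apply BX_scal, BX_add; apply BX_scal, Phi_bounded; auto. }
  assert (ZD : forall y, D y = vzero).
  { apply (zero_of_functionals D (BX_lin D HD)). intros y g Hg Hgy.
    pose proof (Phi_functional_linear y g a b A B Hg Hgy AA AB) as E.
    destruct Hg as [ga [gs _]].
    change (g (vadd (Phi (op_add (op_scal a A) (op_scal b B)) y)
              (vscal (RtoC (-1)) (vadd (vscal a (Phi A y)) (vscal b (Phi B y))))) = RtoC 0).
    rewrite ga, gs, ga, !gs, E. ring. }
  apply functional_extensionality. intros y.
  apply (vadd_cancel (vscal (RtoC (-1)) (L y))).
  rewrite vadd_comm. change (D y = vadd (vscal (RtoC (-1)) (L y)) (L y)).
  rewrite ZD. vring.
Qed.

Lemma Phi_injective A B : A1 A -> A1 B -> Phi A = Phi B -> A = B.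
Proof.
  intros AA AB E.
  assert (Z : op_add (op_scal (RtoC 1) A) (op_scal (RtoC (-1)) B) = op_zero).
  { apply Phi_eq_zero; [apply A1_lc; auto|].
    rewrite Phi_linear, E by auto. apply functional_extensionality. intros y.
    unfold op_add, op_scal, op_zero. vring. }
  apply functional_extensionality. intros y.
  pose proof (f_equal (fun f => f y) Z) as Zy. unfold op_add, op_scal, op_zero in Zy.
  transitivity (vadd (vadd (vscal (RtoC 1) (A y)) (vscal (RtoC (-1)) (B y))) (B y)); [vring|].
  rewrite Zy, vadd_zero_l. reflexivity.
Qed.

(** [Φ] maps rank-one operators to rank-one operators: if [Φ(A)] had rank two,
    a rank-two [S = Φ(B)] would give [±m ∈ σπ(B^r A B^s)]. *)
Lemma Phi_rank_one A : A1 A -> rank_one A -> rank_one (Phi A).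
Proof.
  intros AA [Hr Hn]. split.
  - apply NNPP. intros Hn2.
    destruct (periph_pm_of_not_rank1 (Phi A) r s hrs (Phi_bounded A AA) Hn2)
      as [S [HS [HS2 [m [Hm0 [Pm Pm']]]]]].
    destruct (hsurj2 S HS HS2) as [B [AB <-]].
    apply (proj2 (hpres A B AA AB _)) in Pm. apply (proj2 (hpres A B AA AB _)) in Pm'.
    exact (Hm0 (periph_pm_rank1 B A r s m (A1_bounded B AB) (A1_bounded A AA) Hr Pm Pm')).
  - intros E. exact (Hn (Phi_eq_zero A AA E)).
Qed.

(** Conversely, if [A] had rank two, a rank-two [S] in [A1] would give
    [±m ∈ σπ(Φ(S)^r Φ(A) Φ(S)^s)] with [Φ(A)] of rank one. *)
Lemma rank_one_of_Phi A : A1 A -> rank_one (Phi A) -> rank_one A.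
Proof.
  intros AA [Hr Hn]. split.
  - apply NNPP. intros Hn2.
    destruct (periph_pm_of_not_rank1 A r s hrs (A1_bounded A AA) Hn2)
      as [S [HS [HS2 [m [Hm0 [Pm Pm']]]]]].
    pose proof (A1_of_rank2 S HS HS2) as AS.
    apply (proj1 (hpres A S AA AS _)) in Pm. apply (proj1 (hpres A S AA AS _)) in Pm'.
    exact (Hm0 (periph_pm_rank1 (Phi S) (Phi A) r s m (Phi_bounded S AS) (Phi_bounded A AA) Hr Pm Pm')).
  - intros E. apply Hn. rewrite E. exact Phi_zero.
Qed.

End Preserver.

Theorem mainTheorem4 (X1 X2 : CBanach) (A1 : op X1 -> Prop) (A2 : op X2 -> Prop)
  (r s : nat) (Phi : op X1 -> op X2)
  (hA1 : standard_op_alg A1) (hA2 : standard_op_alg A2)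
  (hrs : (1 <= r + s)%nat)
  (hmaps : forall A, A1 A -> A2 (Phi A))
  (hsurj2 : forall T, in_BX T -> rank_le T 2 -> exists A, A1 A /\ Phi A = T)
  (hpres : forall A B, A1 A -> A1 B -> forall z,
     periph_spectrum (sandwich r s B A) z <->
     periph_spectrum (sandwich r s (Phi B) (Phi A)) z) :
  (forall A, A1 A -> (Phi A = op_zero <-> A = op_zero)) /\
  (forall a b A B, A1 A -> A1 B ->
     Phi (op_add (op_scal a A) (op_scal b B)) =
     op_add (op_scal a (Phi A)) (op_scal b (Phi B))) /\
  (forall A B, A1 A -> A1 B -> Phi A = Phi B -> A = B) /\
  (forall A, A1 A -> (rank_one A <-> rank_one (Phi A))).
Proof.
  split; [|split; [|split]].
  - intros A AA. split; [exact (Phi_eq_zero X1 X2 A1 A2 r s Phi hA1 hA2 hrs hmaps hpres A AA)|].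
    intros ->. exact (Phi_zero X1 X2 A1 A2 r s Phi hA1 hA2 hrs hmaps hsurj2 hpres).
  - exact (Phi_linear X1 X2 A1 A2 r s Phi hA1 hA2 hrs hmaps hsurj2 hpres).
  - exact (Phi_injective X1 X2 A1 A2 r s Phi hA1 hA2 hrs hmaps hsurj2 hpres).
  - intros A AA. split.
    + exact (Phi_rank_one X1 X2 A1 A2 r s Phi hA1 hA2 hrs hmaps hsurj2 hpres A AA).
    + exact (rank_one_of_Phi X1 X2 A1 A2 r s Phi hA1 hA2 hrs hmaps hsurj2 hpres A AA).
Qed.
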